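(* Let $k\ge1$ and consider the following linear maps $\mathcal{D}^k_{0,1}(S^1)\to\mathcal{D}^k_{0,1}(S^1)$, written for $A=\sum_{i=0}^k a_i(x)\frac{d^i}{dx^i}$ in a local coordinate $x$ (with $d=\frac{d}{dx}\in\mathcal{D}^1_{0,1}(S^1)$ the de Rham differential and functions understood as zeroth order operators): $C(A)=\sum_{i=0}^k(-1)^i\big(\frac{d}{dx}\big)^i\circ a_i(x)$; $P_0(A)=a_0(x)$; $P_0^*(A)=\sum_{i=0}^k(-1)^i a_i^{(i)}(x)$; $P_1(A)=\big(\sum_{i=1}^k(-1)^{i-1}a_i^{(i-1)}(x)\big)\circ d$; $L(A)=\big(\int_{S^1}a_0(x)\,dx\big)\, d$. Then these maps belong to $\mathcal{I}^k_{0,1}(S^1)$ and satisfy the following relations (products are compositions): $P_0P_0=P_0$, $P_0C=P_0^*$, $P_0P_0^*=P_0^*$, $P_0P_1=0$, $P_0L=0$; $CP_0=P_0$, $C^2=\mathrm{Id}$, $CP_0^*=P_0^*$, $CP_1=P_0^*-P_1-P_0$, $CL=-L$; $P_0^*P_0=P_0$, $P_0^*C=P_0$, $P_0^*P_0^*=P_0^*$, $P_0^*P_1=P_0^*-P_0$, $P_0^*L=0$; $P_1P_0=0$, $P_1C=-P_1$, $P_1P_0^*=0$, $P_1P_1=P_1$, $P_1L=L$; $LP_0=L$, $LC=L$, $LP_0^*=L$, $LP_1=0$, $LL=0$.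
   Context: $\mathcal{F}_\lambda$ denotes the space of smooth $\lambda$-densities $\phi(x)(dx)^\lambda$ on $S^1$ with $\mathrm{Diff}(S^1)$-action $\rho^\lambda_{f^{-1}}:\phi(x)(dx)^\lambda\mapsto (f'(x))^\lambda\phi(f(x))(dx)^\lambda$; in particular $\mathcal{F}_0$ is functions and $\mathcal{F}_1$ is 1-forms. $\mathcal{D}^k_{0,1}(S^1)$ is the space of linear differential operators $A=\sum_{i=0}^k a_i(x)\frac{d^i}{dx^i}:\mathcal{F}_0\to\mathcal{F}_1$ of order $\le k$, with $\mathrm{Diff}(S^1)$-action $A\mapsto\rho^1_f\circ A\circ\rho^0_{f^{-1}}$. $\mathcal{I}^k_{0,1}(S^1)$ is the associative algebra of linear maps $\mathcal{D}^k_{0,1}(S^1)\to\mathcal{D}^k_{0,1}(S^1)$ commuting with this action. Note that $a_0(x)dx$ is a well-defined 1-form, so $\int_{S^1}a_0\,dx$ is well defined. *)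

From Stdlib Require Import Reals ClassicalEpsilon.
From Coquelicot Require Import Coquelicot.
Open Scope R_scope.

(* S^1 = R/Z: functions / densities on S^1 are 1-periodic functions on R,
   written in the global coordinate x. *)
Definition smooth (f : R -> R) : Prop :=
  forall (n : nat) (x : R), ex_derive (Derive_n f n) x.
Definition periodic (f : R -> R) : Prop := forall x, f (x + 1) = f x.
Definition sfun (f : R -> R) : Prop := smooth f /\ periodic f.

(* Orientation-preserving diffeomorphisms of S^1, via their lifts to R. *)
Definition diffS1 (f : R -> R) : Prop :=
  smooth f /\ (forall x, 0 < Derive f x) /\ (forall x, f (x + 1) = f x + 1).

(* A differential operator A = sum_{i=0}^k a_i(x) (d/dx)^i is represented by
   its coefficient sequence a : nat -> (R -> R), with a i = 0 for i > k. *)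
Definition Dk (k : nat) (a : nat -> R -> R) : Prop :=
  (forall i, sfun (a i)) /\ (forall i, (k < i)%nat -> a i = (fun _ => 0)).

Definition op (k : nat) (a : nat -> R -> R) (g : R -> R) : R -> R :=
  fun x => sum_n (fun i => a i x * Derive_n g i x) k.

(* b = f . a  for the action A |-> rho^1_f o A o rho^0_{f^{-1}}, where
   rho^lambda_{f^{-1}} phi = (f')^lambda (phi o f).  Equivalently
   rho^1_{f^{-1}} o (f.A) = A o rho^0_{f^{-1}}, i.e.
   f'(x) * (f.A)(phi)(f x) = A(phi o f)(x). *)
Definition act_rel (k : nat) (f : R -> R) (a b : nat -> R -> R) : Prop :=
  forall phi, sfun phi -> forall x,
    Derive f x * op k b phi (f x) = op k a (fun y => phi (f y)) x.

Definition Map := (nat -> R -> R) -> (nat -> R -> R).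

(* Membership in I^k_{0,1}(S^1): a linear self-map of D^k_{0,1} commuting
   with the Diff(S^1)-action. *)
Definition in_Ik (k : nat) (T : Map) : Prop :=
  (forall a, Dk k a -> Dk k (T a)) /\
  (forall a c, Dk k a -> Dk k c ->
     T (fun i x => a i x + c i x) = (fun i x => T a i x + T c i x)) /\
  (forall r a, Dk k a -> T (fun i x => r * a i x) = (fun i x => r * T a i x)) /\
  (forall f, diffS1 f -> forall a b, Dk k a -> Dk k b ->
     act_rel k f a b -> act_rel k f (T a) (T b)).

Definition eqmap (k : nat) (T S : Map) : Prop := forall a, Dk k a -> T a = S a.

Definition mcomp (T S : Map) : Map := fun a => T (S a).
Definition idmap : Map := fun a => a.
Definition zeromap : Map := fun _ _ _ => 0.
Definition addmap (T S : Map) : Map := fun a i x => T a i x + S a i x.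
Definition oppmap (T : Map) : Map := fun a i x => - T a i x.

Definition Cspec (k : nat) (a b : nat -> R -> R) : Prop :=
  Dk k b /\
  forall g, sfun g ->
    op k b g = (fun x => sum_n (fun i => (-1) ^ i * Derive_n (fun y => a i y * g y) i x) k).

Lemma inhabited_coeffs : inhabited (nat -> R -> R).
Proof. exact (inhabits (fun _ _ => 0)). Qed.

(* The coefficient sequence of C(A) (chosen; its correctness is part of the theorem). *)
Definition Cmap (k : nat) : Map :=
  fun a => epsilon inhabited_coeffs (Cspec k a).

Definition P0 (k : nat) : Map :=
  fun a i => match i with O => a O | _ => fun _ => 0 end.

Definition P0s (k : nat) : Map :=
  fun a i => match i with
             | O => fun x => sum_n (fun j => (-1) ^ j * Derive_n (a j) j x) k
             | _ => fun _ => 0 end.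

Definition P1 (k : nat) : Map :=
  fun a i => match i with
             | 1%nat => fun x => sum_n (fun j => (-1) ^ j * Derive_n (a (S j)) j x) (k - 1)
             | _ => fun _ => 0 end.

Definition Lmap (k : nat) : Map :=
  fun a i => match i with
             | 1%nat => fun _ => RInt (a O) 0 1
             | _ => fun _ => 0 end.

(* C(A) is the formal adjoint of A for the pairing [RInt (psi * A phi)] of
   functions with 1-forms: the Leibniz expansion shows it exists, and it is
   unique because an operator killing all test functions has zero coefficients
   (test against [sin(2 pi (x - x0))^n]).  Adjointness gives C o C = id and,
   after the change of variables y = f x, the equivariance of C.  P0 reads off
   the coefficient a_0 = A(1), and P0^* A = C(A)(1), so both are natural.
   Finally (P1 A)' = a_0 - P0^* A: hence P1 o C + P1 and the naturality defect
   of P1 have zero derivative, and since both are local expressions they vanish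
   where the coefficients vanish to high order; a binomial partition of unity
   made of such functions shows they vanish identically.  L is natural because
   the integral of the 1-form a_0 dx is, and the multiplication table is a
   computation with operators of order at most one. *)

From Stdlib Require Import Reals Lra Lia ZArith ClassicalEpsilon FunctionalExtensionality.
From Coquelicot Require Import Coquelicot.
Open Scope R_scope.

(* Coquelicot states many results in carriers such as [R_AbsRing] that [ring]
   does not identify with [R]; sums and integrals are abstracted as atoms. *)
Ltac ring_R :=
  match goal with |- @eq _ ?x ?y => change (@eq R x y) end;
  repeat match goal with
  | |- context [?t] =>
      match t with sum_n _ _ => idtac | RInt _ _ _ => idtac end;
      let s := fresh "s" in pose (s := t : R); change t with s; clearbody s
  end; ring.

Lemma smooth_ex_derive f : smooth f -> forall x, ex_derive f x.
Proof. intros H x. exact (H 0%nat x). Qed.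

Lemma smooth_ex_derive_n f : smooth f -> forall n x, ex_derive_n f n x.
Proof. intros H [|n] x; simpl; auto. Qed.

Lemma smooth_locally f x n : smooth f ->
  locally x (fun y => forall k, (k <= n)%nat -> ex_derive_n f k y).
Proof. intros H. apply filter_forall. intros y k _. now apply smooth_ex_derive_n. Qed.

Lemma smooth_ext f g : (forall x, f x = g x) -> smooth f -> smooth g.
Proof.
  intros E H n x. apply ex_derive_ext with (Derive_n f n).
  - intros t. now apply Derive_n_ext.
  - apply H.
Qed.

Lemma Derive_n_S f n x : Derive_n f (S n) x = Derive_n (Derive f) n x.
Proof. rewrite <- Nat.add_1_r, <- (Derive_n_comp f n 1). reflexivity. Qed.

Lemma smooth_Derive f : smooth f -> smooth (Derive f).
Proof.
  intros H n x. apply ex_derive_ext with (Derive_n f (S n)).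
  - intros t. apply Derive_n_S.
  - apply H.
Qed.

Lemma smooth_Derive_n f m : smooth f -> smooth (Derive_n f m).
Proof. induction m; intros H; simpl; auto using smooth_Derive. Qed.

(* Smoothness is proved by exhibiting a class of differentiable functions
   closed under [Derive]; [gen_alg G] is one as soon as it contains the
   derivatives of the generators. *)
Inductive gen_alg (G : (R -> R) -> Prop) : (R -> R) -> Prop :=
  | gen_alg_gen u : G u -> gen_alg G u
  | gen_alg_const c : gen_alg G (fun _ => c)
  | gen_alg_plus u v : gen_alg G u -> gen_alg G v -> gen_alg G (fun x => u x + v x)
  | gen_alg_mult u v : gen_alg G u -> gen_alg G v -> gen_alg G (fun x => u x * v x)
  | gen_alg_ext u v : gen_alg G u -> (forall x, u x = v x) -> gen_alg G v.

Lemma smooth_of_Derive_closed (S : (R -> R) -> Prop) :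
  (forall u, S u -> (forall x, ex_derive u x) /\ S (Derive u)) ->
  forall u, S u -> smooth u.
Proof.
  intros H u Su.
  assert (K : forall n, S (Derive_n u n)) by (induction n; [exact Su|apply H, IHn]).
  intros n x. apply (H _ (K n)).
Qed.

Lemma gen_alg_Derive_closed G :
  (forall h, G h -> (forall x, ex_derive h x) /\ gen_alg G (Derive h)) ->
  forall u, gen_alg G u -> (forall x, ex_derive u x) /\ gen_alg G (Derive u).
Proof.
  intros HG u Hu.
  induction Hu as [h Gh|c|u v _ [Du IHu] _ [Dv IHv]|u v Hu [Du IHu] Hv [Dv IHv]|u v _ [Du IHu] E].
  - auto.
  - split; [intros; apply ex_derive_const|].
    apply gen_alg_ext with (fun _ => 0); [apply gen_alg_const|intros; now rewrite Derive_const].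
  - split; [intros; now apply (ex_derive_plus u v)|].
    apply gen_alg_ext with (fun x => Derive u x + Derive v x); [now apply gen_alg_plus|].
    intros x. now rewrite Derive_plus.
  - split; [intros; now apply ex_derive_mult|].
    apply gen_alg_ext with (fun x => Derive u x * v x + u x * Derive v x).
    + apply gen_alg_plus; apply gen_alg_mult; auto.
    + intros x. now rewrite Derive_mult.
  - split; [intros x; now apply ex_derive_ext with u|].
    apply gen_alg_ext with (Derive u); [auto|intros x; now apply Derive_ext].
Qed.

Lemma gen_alg_smooth G :
  (forall h, G h -> (forall x, ex_derive h x) /\ gen_alg G (Derive h)) ->
  forall u, gen_alg G u -> smooth u.
Proof. intros HG. apply smooth_of_Derive_closed. now apply gen_alg_Derive_closed. Qed.

Lemma smooth_gen_alg u : gen_alg smooth u -> smooth u.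
Proof.
  apply gen_alg_smooth. intros h H.
  split; [now apply smooth_ex_derive|apply gen_alg_gen; now apply smooth_Derive].
Qed.

Lemma smooth_plus f g : smooth f -> smooth g -> smooth (fun x => f x + g x).
Proof. intros. apply smooth_gen_alg, gen_alg_plus; now apply gen_alg_gen. Qed.

Lemma smooth_mult f g : smooth f -> smooth g -> smooth (fun x => f x * g x).
Proof. intros. apply smooth_gen_alg, gen_alg_mult; now apply gen_alg_gen. Qed.

Lemma smooth_const c : smooth (fun _ => c).
Proof. apply smooth_gen_alg, gen_alg_const. Qed.

Lemma smooth_scal c f : smooth f -> smooth (fun x => c * f x).
Proof. intros. apply smooth_mult; auto using smooth_const. Qed.

Lemma smooth_opp f : smooth f -> smooth (fun x => - f x).
Proof.
  intros. apply smooth_ext with (fun x => -1 * f x); [intros; ring|now apply smooth_scal].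
Qed.

Lemma smooth_pow f n : smooth f -> smooth (fun x => f x ^ n).
Proof. intros H. induction n; simpl; auto using smooth_const, smooth_mult. Qed.

Lemma smooth_id : smooth (fun x => x).
Proof.
  apply (gen_alg_smooth (fun u => u = fun x => x)); [|now apply gen_alg_gen].
  intros u ->. split; [intros; apply ex_derive_id|].
  apply gen_alg_ext with (fun _ => 1); [apply gen_alg_const|intros; now rewrite Derive_id].
Qed.

Lemma smooth_comp g f : smooth g -> smooth f -> smooth (fun x => g (f x)).
Proof.
  intros Hg Hf.
  apply (gen_alg_smooth (fun h => smooth h \/ exists g', smooth g' /\ h = fun x => g' (f x)));
    [|apply gen_alg_gen; right; eauto].
  intros h [H|[g' [Hg' ->]]].
  - split; [now apply smooth_ex_derive|apply gen_alg_gen; left; now apply smooth_Derive].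
  - split; [intros x; apply ex_derive_comp; now apply smooth_ex_derive|].
    apply gen_alg_ext with (fun x => Derive f x * Derive g' (f x)).
    + apply gen_alg_mult; apply gen_alg_gen; [left|right; exists (Derive g')];
        auto using smooth_Derive.
    + intros x. symmetry; apply Derive_comp; now apply smooth_ex_derive.
Qed.

Lemma smooth_inv f : smooth f -> (forall x, f x <> 0) -> smooth (fun x => / f x).
Proof.
  intros Hf Hn.
  apply (gen_alg_smooth (fun h => smooth h \/ h = fun x => / f x)); [|apply gen_alg_gen; now right].
  intros h [H| ->].
  - split; [now apply smooth_ex_derive|apply gen_alg_gen; left; now apply smooth_Derive].
  - split; [intros x; apply ex_derive_inv; auto; now apply smooth_ex_derive|].
    apply gen_alg_ext with (fun x => (-1 * Derive f x) * (/ f x * / f x)).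
    + apply gen_alg_mult; apply gen_alg_mult; try apply gen_alg_const; apply gen_alg_gen;
        auto using smooth_Derive.
    + intros x. rewrite Derive_inv by auto using smooth_ex_derive. specialize (Hn x). field; auto.
Qed.

Lemma smooth_sin_cos a b :
  smooth (fun x => sin (a * x + b)) /\ smooth (fun x => cos (a * x + b)).
Proof.
  set (G := fun h => h = (fun x => sin (a * x + b)) \/ h = (fun x => cos (a * x + b))).
  assert (HG : forall h, G h -> (forall x, ex_derive h x) /\ gen_alg G (Derive h)).
  { intros h [->| ->]; (split; [intros x; auto_derive; auto|]).
    - apply gen_alg_ext with (fun x => a * cos (a * x + b)).
      { apply gen_alg_mult; [apply gen_alg_const|apply gen_alg_gen; now right]. }
      intros x. symmetry. apply is_derive_unique. auto_derive; auto. ring.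
    - apply gen_alg_ext with (fun x => - a * sin (a * x + b)).
      { apply gen_alg_mult; [apply gen_alg_const|apply gen_alg_gen; now left]. }
      intros x. symmetry. apply is_derive_unique. auto_derive; auto. ring. }
  split; apply (gen_alg_smooth G HG), gen_alg_gen; [left|right]; auto.
Qed.

Lemma periodic_Derive_shift h c : (forall x, ex_derive h x) ->
  (forall x, h (x + 1) = h x + c) -> periodic (Derive h).
Proof.
  intros Hd Hs x.
  transitivity (Derive (fun y => h (y + 1)) x).
  - rewrite (Derive_comp h (fun y => y + 1) x); auto; [|auto_derive; auto].
    replace (Derive (fun y => y + 1) x) with 1; [ring|].
    symmetry; apply is_derive_unique; auto_derive; auto.
  - rewrite (Derive_ext _ (fun y => h y + c)) by auto.
    rewrite Derive_plus by auto using ex_derive_const. rewrite Derive_const. ring.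
Qed.

Lemma periodic_Derive_n h n : smooth h -> periodic h -> periodic (Derive_n h n).
Proof.
  intros Hs Hp. induction n; simpl; auto.
  apply (periodic_Derive_shift _ 0).
  - apply smooth_ex_derive, smooth_Derive_n, Hs.
  - intros x. rewrite IHn. ring_R.
Qed.

Lemma sfun_Derive_n h n : sfun h -> sfun (Derive_n h n).
Proof. intros [Hs Hp]. split; [now apply smooth_Derive_n|now apply periodic_Derive_n]. Qed.

Lemma sfun_Derive h : sfun h -> sfun (Derive h).
Proof. exact (fun H => sfun_Derive_n h 1 H). Qed.

Lemma sfun_ext f g : (forall x, f x = g x) -> sfun f -> sfun g.
Proof.
  intros E [H1 H2]. split; [now apply smooth_ext with f|intros x; rewrite <- !E; apply H2].
Qed.

Lemma sfun_plus f g : sfun f -> sfun g -> sfun (fun x => f x + g x).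
Proof. intros [] []. split; [now apply smooth_plus|intros x; unfold periodic in *; congruence]. Qed.

Lemma sfun_mult f g : sfun f -> sfun g -> sfun (fun x => f x * g x).
Proof. intros [] []. split; [now apply smooth_mult|intros x; unfold periodic in *; congruence]. Qed.

Lemma sfun_const c : sfun (fun _ => c).
Proof. split; [apply smooth_const|intros x; auto]. Qed.

Lemma sfun_scal c f : sfun f -> sfun (fun x => c * f x).
Proof. intros. apply sfun_mult; auto using sfun_const. Qed.

Lemma sfun_opp f : sfun f -> sfun (fun x => - f x).
Proof. intros [] . split; [now apply smooth_opp|intros x; unfold periodic in *; congruence]. Qed.

Lemma sfun_pow f n : sfun f -> sfun (fun x => f x ^ n).
Proof. intros [] . split; [now apply smooth_pow|intros x; unfold periodic in *; congruence]. Qed.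

Lemma sum_n_S (a : nat -> R) n : sum_n a (S n) = sum_n a n + a (S n).
Proof. exact (sum_Sn a n). Qed.

Lemma sum_n_0 (a : nat -> R) : sum_n a 0 = a 0%nat.
Proof. exact (sum_O a). Qed.

Lemma sum_n_ext_le (a b : nat -> R) n :
  (forall i, (i <= n)%nat -> a i = b i) -> sum_n a n = sum_n b n.
Proof. exact (sum_n_ext_loc a b n). Qed.

Lemma sum_n_plus_R (a b : nat -> R) n : sum_n (fun i => a i + b i) n = sum_n a n + sum_n b n.
Proof. exact (sum_n_plus a b n). Qed.

Lemma sum_n_scal_R c (a : nat -> R) n : sum_n (fun i => c * a i) n = c * sum_n a n.
Proof. exact (sum_n_scal_l (V := R_ModuleSpace) c a n). Qed.

Lemma sum_n_zero (a : nat -> R) n : (forall i, (i <= n)%nat -> a i = 0) -> sum_n a n = 0.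
Proof.
  intros H. rewrite (sum_n_ext_le _ (fun _ => 0)) by auto.
  rewrite sum_n_const. ring_R.
Qed.

Lemma sum_n_trunc (a : nat -> R) m n :
  (m <= n)%nat -> (forall i, (m < i)%nat -> a i = 0) -> sum_n a n = sum_n a m.
Proof.
  intros Hmn H. induction Hmn; [reflexivity|]. rewrite sum_n_S, IHHmn, H; [ring_R|lia].
Qed.

Lemma sum_n_shift (a : nat -> R) n :
  sum_n (fun i => match i with 0%nat => 0 | S i' => a i' end) (S n) = sum_n a n.
Proof.
  induction n; [rewrite sum_n_S, !sum_n_0; ring_R|].
  rewrite sum_n_S, IHn, sum_n_S. reflexivity.
Qed.

Lemma sum_n_first (a : nat -> R) n : sum_n a (S n) = a 0%nat + sum_n (fun i => a (S i)) n.
Proof.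
  induction n; [rewrite sum_n_S, !sum_n_0; ring_R|].
  rewrite sum_n_S, IHn, sum_n_S. ring_R.
Qed.

Lemma smooth_sum (F : nat -> R -> R) n :
  (forall i, smooth (F i)) -> smooth (fun y => sum_n (fun i => F i y) n).
Proof.
  intros H. induction n.
  - apply smooth_ext with (F 0%nat); [intros; now rewrite sum_n_0|apply H].
  - apply smooth_ext with (fun y => sum_n (fun i => F i y) n + F (S n) y);
      [intros; now rewrite sum_n_S|now apply smooth_plus].
Qed.

Lemma sfun_sum (F : nat -> R -> R) n :
  (forall i, sfun (F i)) -> sfun (fun y => sum_n (fun i => F i y) n).
Proof.
  intros H. induction n.
  - apply sfun_ext with (F 0%nat); [intros; now rewrite sum_n_0|apply H].
  - apply sfun_ext with (fun y => sum_n (fun i => F i y) n + F (S n) y);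
      [intros; now rewrite sum_n_S|now apply sfun_plus].
Qed.

Lemma Derive_n_plus_smooth f g n x : smooth f -> smooth g ->
  Derive_n (fun y => f y + g y) n x = Derive_n f n x + Derive_n g n x.
Proof. intros. apply Derive_n_plus; now apply smooth_locally. Qed.

Lemma Derive_n_sum_smooth (F : nat -> R -> R) m n x : (forall i, smooth (F i)) ->
  Derive_n (fun y => sum_n (fun i => F i y) m) n x = sum_n (fun i => Derive_n (F i) n x) m.
Proof.
  intros H. apply Derive_n_sum_n.
  apply filter_forall. intros y l j _ _. now apply smooth_ex_derive_n.
Qed.

Lemma Derive_n_zero n x : Derive_n (fun _ => 0) n x = 0.
Proof. destruct n; [reflexivity|apply Derive_n_const]. Qed.

(** * Coefficient sequences and the formal adjoint *)

Definition coeffs := nat -> R -> R.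
Definition smooth_coeffs (c : coeffs) := forall j, smooth (c j).
Definition sfun_coeffs (c : coeffs) := forall j, sfun (c j).
Definition order_le (N : nat) (c : coeffs) := forall j x, (N < j)%nat -> c j x = 0.

Lemma Dk_intro k b : sfun_coeffs b -> order_le k b -> Dk k b.
Proof.
  intros H1 H2. split; auto.
  intros i Hi. apply functional_extensionality. intros x. now apply H2.
Qed.

Lemma Dk_sfun k a : Dk k a -> sfun_coeffs a.
Proof. intros [H _]. exact H. Qed.

Lemma Dk_smooth k a : Dk k a -> smooth_coeffs a.
Proof. intros [H _] j. apply H. Qed.

Lemma Dk_order_le k a : Dk k a -> order_le k a.
Proof. intros [_ H] j x Hj. now rewrite H. Qed.

Lemma coeffs_ext (a b : coeffs) : (forall i x, a i x = b i x) -> a = b.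
Proof.
  intros H. apply functional_extensionality; intros i.
  apply functional_extensionality; intros x. apply H.
Qed.

Lemma op_trunc m N c g x : order_le m c -> (m <= N)%nat -> op N c g x = op m c g x.
Proof.
  intros Ho H. unfold op. apply sum_n_trunc; auto.
  intros i Hi. rewrite Ho by auto. ring_R.
Qed.

Lemma op_minus N b c g x : op N (fun j y => b j y - c j y) g x = op N b g x - op N c g x.
Proof.
  unfold op.
  rewrite (sum_n_ext_le _ (fun i => b i x * Derive_n g i x + -1 * (c i x * Derive_n g i x)))
    by (intros; ring_R).
  rewrite sum_n_plus_R, sum_n_scal_R. ring_R.
Qed.

(* The coefficients of [g |-> (op c g)'], by the Leibniz rule. *)
Definition deriv_coeffs (c : coeffs) : coeffs :=
  fun j x => Derive (c j) x + match j with 0%nat => 0 | S j' => c j' x end.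

Lemma smooth_deriv_coeffs c : smooth_coeffs c -> smooth_coeffs (deriv_coeffs c).
Proof.
  intros H j. apply smooth_plus; [now apply smooth_Derive|].
  destruct j; [apply smooth_const|apply H].
Qed.

Lemma sfun_deriv_coeffs c : sfun_coeffs c -> sfun_coeffs (deriv_coeffs c).
Proof.
  intros H j. apply sfun_plus; [now apply sfun_Derive|].
  destruct j; [apply sfun_const|apply H].
Qed.

Lemma order_le_deriv_coeffs N c : order_le N c -> order_le (S N) (deriv_coeffs c).
Proof.
  intros H j x Hj. unfold deriv_coeffs. destruct j; [lia|].
  rewrite (H j x) by lia.
  rewrite (Derive_ext _ (fun _ => 0)), Derive_const by (intros; apply H; lia). ring_R.
Qed.

Lemma Derive_op N c g x : smooth_coeffs c -> smooth g -> order_le N c ->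
  Derive (op N c g) x = op (S N) (deriv_coeffs c) g x.
Proof.
  intros Hc Hg Ho. unfold op.
  change (Derive (fun y => sum_n (fun i => c i y * Derive_n g i y) N) x) with
    (Derive_n (fun y => sum_n (fun i => (fun z => c i z * Derive_n g i z) y) N) 1 x).
  rewrite Derive_n_sum_smooth by (intros i; apply smooth_mult; auto using smooth_Derive_n).
  simpl Derive_n.
  rewrite (sum_n_ext_le (fun i => Derive (fun z => c i z * Derive_n g i z) x)
    (fun i => Derive (c i) x * Derive_n g i x + c i x * Derive_n g (S i) x)).
  2:{ intros i _. apply Derive_mult; [now apply smooth_ex_derive|].
      apply (smooth_ex_derive _ (smooth_Derive_n g i Hg)). }
  unfold deriv_coeffs.
  rewrite (sum_n_ext_le
    (fun i => (Derive (c i) x + match i with 0%nat => 0 | S j => c j x end) * Derive_n g i x)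
    (fun i => Derive (c i) x * Derive_n g i x +
     match i with 0%nat => 0 | S j => c j x * Derive_n g (S j) x end))
    by (intros [|i] _; ring_R).
  rewrite !sum_n_plus_R. f_equal.
  - rewrite sum_n_S, (Derive_ext _ (fun _ => 0)), Derive_const by (intros; apply Ho; lia).
    ring_R.
  - rewrite <- (sum_n_shift (fun i => c i x * Derive_n g (S i) x)).
    apply sum_n_ext_le. intros [|i] _; reflexivity.
Qed.

Definition mult_coeffs (a : R -> R) : coeffs :=
  fun j => match j with 0%nat => a | _ => fun _ => 0 end.

(* The coefficients of [g |-> (a g)^(i)]. *)
Definition Dn_mult_coeffs (i : nat) (a : R -> R) : coeffs :=
  Nat.iter i deriv_coeffs (mult_coeffs a).

Lemma smooth_Dn_mult_coeffs i a : smooth a -> smooth_coeffs (Dn_mult_coeffs i a).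
Proof.
  intros H. induction i; simpl; auto using smooth_deriv_coeffs.
  intros [|j]; simpl; auto using smooth_const.
Qed.

Lemma sfun_Dn_mult_coeffs i a : sfun a -> sfun_coeffs (Dn_mult_coeffs i a).
Proof.
  intros H. induction i; simpl; auto using sfun_deriv_coeffs.
  intros [|j]; simpl; auto using sfun_const.
Qed.

Lemma order_le_Dn_mult_coeffs i a : order_le i (Dn_mult_coeffs i a).
Proof.
  induction i; simpl; auto using order_le_deriv_coeffs.
  intros [|j] x H; [lia|reflexivity].
Qed.

Lemma Derive_n_mult_op a g i x : smooth a -> smooth g ->
  Derive_n (fun y => a y * g y) i x = op i (Dn_mult_coeffs i a) g x.
Proof.
  intros Ha Hg. revert x. induction i; intros x.
  - unfold op. now rewrite sum_n_0.
  - simpl Derive_n. rewrite (Derive_ext _ (op i (Dn_mult_coeffs i a) g)) by auto.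
    apply Derive_op; auto using smooth_Dn_mult_coeffs, order_le_Dn_mult_coeffs.
Qed.

Definition C_coeffs (k : nat) (a : coeffs) : coeffs :=
  fun j x => sum_n (fun i => (-1) ^ i * Dn_mult_coeffs i (a i) j x) k.

Lemma op_C_coeffs k a g x : smooth_coeffs a -> smooth g ->
  op k (C_coeffs k a) g x = sum_n (fun i => (-1) ^ i * Derive_n (fun y => a i y * g y) i x) k.
Proof.
  intros Ha Hg. unfold op, C_coeffs.
  rewrite (sum_n_ext_le _ (fun j => sum_n (fun i =>
             (-1) ^ i * Dn_mult_coeffs i (a i) j x * Derive_n g j x) k)).
  2:{ intros j _. rewrite Rmult_comm, <- sum_n_scal_R. apply sum_n_ext_le. intros; ring_R. }
  rewrite sum_n_switch. apply sum_n_ext_le. intros i Hi.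
  rewrite Derive_n_mult_op, <- (op_trunc i k) by auto using order_le_Dn_mult_coeffs.
  unfold op. rewrite <- sum_n_scal_R. apply sum_n_ext_le. intros; ring_R.
Qed.

Lemma Dk_C_coeffs k a : Dk k a -> Dk k (C_coeffs k a).
Proof.
  intros Ha. apply Dk_intro.
  - intros j. apply sfun_sum. intros i.
    apply sfun_scal, sfun_Dn_mult_coeffs, (Dk_sfun k a Ha).
  - intros j x Hj. apply sum_n_zero. intros i Hi.
    rewrite order_le_Dn_mult_coeffs by lia. ring_R.
Qed.

Lemma Cspec_C_coeffs k a : Dk k a -> Cspec k a (C_coeffs k a).
Proof.
  intros Ha. split; [now apply Dk_C_coeffs|].
  intros g Hg. apply functional_extensionality. intros x.
  apply op_C_coeffs; [exact (Dk_smooth k a Ha)|apply Hg].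
Qed.

(** * Vanishing to finite order *)

Definition flat (u : R -> R) (p : nat) (x0 : R) :=
  forall j, (j < p)%nat -> Derive_n u j x0 = 0.

Lemma flat_S u p x0 : flat u (S p) x0 <-> u x0 = 0 /\ flat (Derive u) p x0.
Proof.
  split.
  - intros H. split; [apply (H 0%nat); lia|].
    intros j Hj. rewrite <- Derive_n_S. apply H; lia.
  - intros [H1 H2] [|j] Hj; [exact H1|]. rewrite Derive_n_S. apply H2; lia.
Qed.

Lemma flat_le u p q x0 : flat u p x0 -> (q <= p)%nat -> flat u q x0.
Proof. intros H Hq j Hj. apply H; lia. Qed.

Lemma flat_0 u x0 : flat u 0 x0.
Proof. intros j H. lia. Qed.

Lemma flat_zero p x0 : flat (fun _ => 0) p x0.
Proof. intros j _. apply Derive_n_zero. Qed.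

Lemma flat_ext u v p x0 : (forall x, u x = v x) -> flat u p x0 -> flat v p x0.
Proof. intros E H j Hj. rewrite <- (Derive_n_ext u v); auto. Qed.

Lemma flat_plus u v p x0 : smooth u -> smooth v ->
  flat u p x0 -> flat v p x0 -> flat (fun x => u x + v x) p x0.
Proof. intros Hu Hv H1 H2 j Hj. rewrite Derive_n_plus_smooth, H1, H2 by auto. ring. Qed.

Lemma flat_Derive_mult u v p x0 :
  smooth u -> smooth v -> flat (fun x => Derive u x * v x + u x * Derive v x) p x0 ->
  flat (Derive (fun x => u x * v x)) p x0.
Proof.
  intros Hu Hv. apply flat_ext. intros x.
  symmetry; apply Derive_mult; now apply smooth_ex_derive.
Qed.

Lemma flat_mult_r p : forall u v x0, smooth u -> smooth v ->
  flat u p x0 -> flat (fun x => u x * v x) p x0.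
Proof.
  induction p as [|p IH]; intros u v x0 Hu Hv H; [apply flat_0|].
  apply flat_S in H as [H1 H2]. apply flat_S. split; [rewrite H1; ring|].
  apply flat_Derive_mult; auto.
  apply flat_plus; auto using smooth_mult, smooth_Derive.
  apply IH; auto using smooth_Derive. apply flat_le with (S p); [apply flat_S|]; auto.
Qed.

Lemma flat_mult_l p u v x0 : smooth u -> smooth v ->
  flat v p x0 -> flat (fun x => u x * v x) p x0.
Proof.
  intros. apply flat_ext with (fun x => v x * u x); [intros; ring|now apply flat_mult_r].
Qed.

Lemma flat_mult n : forall p q u v x0, (p + q)%nat = n -> smooth u -> smooth v ->
  flat u p x0 -> flat v q x0 -> flat (fun x => u x * v x) n x0.
Proof.
  induction n as [|n IH]; intros p q u v x0 Hn Hu Hv H1 H2; [apply flat_0|].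
  destruct p as [|p]; [replace q with (S n) in * by lia; now apply flat_mult_l|].
  destruct q as [|q]; [replace p with n in * by lia; now apply flat_mult_r|].
  apply flat_S in H1 as [H1a H1b]. apply flat_S in H2 as [H2a H2b].
  apply flat_S. split; [rewrite H1a; ring|].
  apply flat_Derive_mult; auto.
  apply flat_plus; auto using smooth_mult, smooth_Derive.
  - apply (IH p (S q)); [lia|..]; auto using smooth_Derive. apply flat_S; auto.
  - apply (IH (S p) q); [lia|..]; auto using smooth_Derive. apply flat_S; auto.
Qed.

Lemma flat_comp p : forall w f x0, smooth w -> smooth f ->
  flat w p (f x0) -> flat (fun x => w (f x)) p x0.
Proof.
  induction p as [|p IH]; intros w f x0 Hw Hf H; [apply flat_0|].
  apply flat_S in H as [H1 H2]. apply flat_S. split; [exact H1|].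
  apply flat_ext with (fun x => Derive w (f x) * Derive f x).
  - intros x. rewrite (Derive_comp w f) by now apply smooth_ex_derive. ring.
  - apply flat_mult_r; auto using smooth_comp, smooth_Derive.
Qed.

Lemma Derive_n_mult_flat p : forall u v x0, smooth u -> smooth v -> flat u p x0 ->
  Derive_n (fun x => u x * v x) p x0 = Derive_n u p x0 * v x0.
Proof.
  induction p as [|p IH]; intros u v x0 Hu Hv H; [reflexivity|].
  rewrite Derive_n_S.
  rewrite (Derive_n_ext _ (fun x => Derive u x * v x + u x * Derive v x))
    by (intros; apply Derive_mult; now apply smooth_ex_derive).
  rewrite Derive_n_plus_smooth by auto using smooth_mult, smooth_Derive.
  assert (H' := proj2 (proj1 (flat_S u p x0) H)).
  rewrite IH, (flat_mult_r (S p) u (Derive v) x0), Derive_n_S by auto using smooth_Derive.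
  ring.
Qed.

Lemma Derive_n_mult_root s x0 : smooth s -> s x0 = 0 -> forall p u, smooth u -> flat u p x0 ->
  Derive_n (fun x => u x * s x) (S p) x0 = INR (S p) * Derive_n u p x0 * Derive s x0.
Proof.
  intros Hs Hs0. induction p as [|p IH]; intros u Hu H.
  - simpl. rewrite Derive_mult, Hs0 by now apply smooth_ex_derive. ring.
  - rewrite Derive_n_S.
    rewrite (Derive_n_ext _ (fun x => Derive u x * s x + u x * Derive s x))
      by (intros; apply Derive_mult; now apply smooth_ex_derive).
    rewrite Derive_n_plus_smooth by auto using smooth_mult, smooth_Derive.
    assert (H' := proj2 (proj1 (flat_S u p x0) H)).
    rewrite IH, Derive_n_mult_flat by auto using smooth_Derive.
    rewrite <- Derive_n_S, !S_INR. ring.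
Qed.

Lemma flat_pow_root s x0 : smooth s -> s x0 = 0 -> forall j,
  flat (fun x => s x ^ j) j x0 /\
  Derive_n (fun x => s x ^ j) j x0 = INR (Factorial.fact j) * Derive s x0 ^ j.
Proof.
  intros Hs Hs0 j. induction j as [|j [F D]]; [split; [apply flat_0|simpl; ring]|].
  split.
  - apply flat_ext with (fun x => s x ^ j * s x); [intros; simpl; ring|].
    apply (flat_mult (S j) j 1); auto using smooth_pow; [lia|].
    intros [|i] Hi; [exact Hs0|lia].
  - rewrite (Derive_n_ext _ (fun x => s x ^ j * s x)) by (intros; simpl; ring).
    rewrite Derive_n_mult_root, D by auto using smooth_pow.
    rewrite fact_simpl, mult_INR. simpl. ring.
Qed.

(* Testing an operator of order [n] against [sin(2 pi (x - x0))^n] isolates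
   [n! (2 pi)^n] times its top coefficient at [x0]. *)
Definition sin_at (x0 y : R) := sin (2 * PI * y + - (2 * PI * x0)).

Lemma sfun_sin_at x0 : sfun (sin_at x0).
Proof.
  split; [exact (proj1 (smooth_sin_cos (2 * PI) (- (2 * PI * x0))))|].
  intros x. unfold sin_at.
  replace (2 * PI * (x + 1) + - (2 * PI * x0))
    with (2 * PI * x + - (2 * PI * x0) + 2 * INR 1 * PI) by (rewrite INR_1; ring).
  apply sin_period.
Qed.

Lemma sin_at_root x0 : sin_at x0 x0 = 0.
Proof. unfold sin_at. replace (2 * PI * x0 + - (2 * PI * x0)) with 0 by ring. apply sin_0. Qed.

Lemma Derive_sin_at x0 : Derive (sin_at x0) x0 = 2 * PI.
Proof.
  apply is_derive_unique. unfold sin_at. auto_derive; auto.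
  replace (2 * PI * x0 + - (2 * PI * x0)) with 0 by ring. rewrite cos_0. ring.
Qed.

Lemma op_vanishing_top n b : order_le n b ->
  (forall g, sfun g -> forall x, op n b g x = 0) -> forall x, b n x = 0.
Proof.
  intros Ho H x0.
  destruct (flat_pow_root (sin_at x0) x0 (proj1 (sfun_sin_at x0)) (sin_at_root x0) n) as [F D].
  specialize (H _ (sfun_pow _ n (sfun_sin_at x0)) x0). unfold op in H.
  destruct n as [|n].
  - rewrite sum_n_0 in H. simpl in H. now rewrite Rmult_1_r in H.
  - rewrite sum_n_S, sum_n_zero, D, Derive_sin_at, Rplus_0_l in H
      by (intros i Hi; rewrite F by lia; ring).
    apply Rmult_integral in H as [H|H]; [exact H|].
    exfalso. revert H. apply Rmult_integral_contrapositive. split.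
    + apply not_0_INR, Factorial.fact_neq_0.
    + apply pow_nonzero. pose proof PI_RGT_0. lra.
Qed.

Lemma op_vanishing_coeffs n : forall b, order_le n b ->
  (forall g, sfun g -> forall x, op n b g x = 0) -> forall j x, b j x = 0.
Proof.
  induction n as [|n IH]; intros b Ho H j x.
  - destruct j; [now apply (op_vanishing_top 0)|apply Ho; lia].
  - pose proof (op_vanishing_top _ b Ho H) as T.
    apply IH; auto.
    + intros i y Hi. destruct (Nat.eq_dec i (S n)) as [->|]; [apply T|apply Ho; lia].
    + intros g Hg y. rewrite <- (H g Hg y). unfold op. rewrite sum_n_S, T. ring_R.
Qed.

Lemma Cspec_unique k a b c : Cspec k a b -> Cspec k a c -> b = c.
Proof.
  intros [Hb Eb] [Hc Ec].
  assert (Z : forall j x, b j x - c j x = 0).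
  { apply (op_vanishing_coeffs k).
    - intros j x Hj. rewrite (Dk_order_le k b), (Dk_order_le k c) by auto. ring.
    - intros g Hg x. rewrite op_minus, Eb, Ec by auto. ring. }
  apply coeffs_ext. intros j x. specialize (Z j x). lra.
Qed.

Lemma Cmap_spec k a : Dk k a -> Cspec k a (Cmap k a).
Proof.
  intros Ha. unfold Cmap. apply epsilon_spec.
  exists (C_coeffs k a). now apply Cspec_C_coeffs.
Qed.

Lemma Cmap_eq k a b : Dk k a -> Cspec k a b -> Cmap k a = b.
Proof. intros Ha. apply Cspec_unique. now apply Cmap_spec. Qed.

Lemma Cmap_C_coeffs k a : Dk k a -> Cmap k a = C_coeffs k a.
Proof. intros Ha. apply Cmap_eq, Cspec_C_coeffs; auto. Qed.

Lemma Dk_Cmap k a : Dk k a -> Dk k (Cmap k a).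
Proof. intros Ha. apply (Cmap_spec k a Ha). Qed.

(** * Integration over the circle *)

Lemma smooth_continuous f x : smooth f -> continuous f x.
Proof. intros H. exact (ex_derive_continuous f x (smooth_ex_derive f H x)). Qed.

Lemma smooth_ex_RInt f a b : smooth f -> ex_RInt f a b.
Proof.
  intros H. apply (ex_RInt_continuous (V := R_CompleteNormedModule)).
  intros z _. now apply smooth_continuous.
Qed.

Lemma RInt_plus_smooth f g a b : smooth f -> smooth g ->
  RInt (fun x => f x + g x) a b = RInt f a b + RInt g a b.
Proof. intros. apply (RInt_plus f g); now apply smooth_ex_RInt. Qed.

Lemma RInt_scal_smooth f c a b : smooth f -> RInt (fun x => c * f x) a b = c * RInt f a b.
Proof. intros. apply (RInt_scal f); now apply smooth_ex_RInt. Qed.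

Lemma RInt_sum_smooth (F : nat -> R -> R) n a b : (forall i, smooth (F i)) ->
  RInt (fun x => sum_n (fun i => F i x) n) a b = sum_n (fun i => RInt (F i) a b : R) n.
Proof.
  intros H. induction n.
  - rewrite sum_n_0. apply RInt_ext. intros; now rewrite sum_n_0.
  - rewrite sum_n_S, <- IHn, <- RInt_plus_smooth by auto using smooth_sum.
    apply RInt_ext. intros; now rewrite sum_n_S.
Qed.

Lemma RInt_ext_R (f g : R -> R) a b : (forall x, f x = g x) -> RInt f a b = RInt g a b.
Proof. intros H. apply RInt_ext. intros; apply H. Qed.

Lemma RInt_zero a b : RInt (fun _ => 0) a b = 0.
Proof. rewrite RInt_const. apply Rmult_0_r. Qed.

Lemma shift_nat (h : R -> R) c : (forall x, h (x + 1) = h x + c) ->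
  forall n x, h (x + INR n) = h x + INR n * c.
Proof.
  intros H n. induction n as [|n IH]; intros x; [simpl; rewrite Rplus_0_r; ring|].
  rewrite S_INR. replace (x + (INR n + 1)) with (x + INR n + 1) by ring.
  rewrite H, IH. ring.
Qed.

Lemma shift_Z (h : R -> R) c : (forall x, h (x + 1) = h x + c) ->
  forall z x, h (x + IZR z) = h x + IZR z * c.
Proof.
  intros H z x. destruct (Z.le_gt_cases 0 z).
  - rewrite <- (Z2Nat.id z), <- INR_IZR_INZ by lia. now apply shift_nat.
  - replace z with (- Z.of_nat (Z.to_nat (- z)))%Z by lia.
    rewrite opp_IZR, <- INR_IZR_INZ.
    pose proof (shift_nat h c H (Z.to_nat (- z)) (x + - INR (Z.to_nat (- z)))) as E.
    rewrite Rplus_assoc, Rplus_opp_l, Rplus_0_r in E. lra.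
Qed.

Lemma RInt_period_shift F c : sfun F -> RInt F c (c + 1) = RInt F 0 1.
Proof.
  intros [Hs Hp].
  assert (E1 : RInt F 1 (c + 1) = RInt F 0 c).
  { pose proof (RInt_comp_lin F 1 1 0 c (smooth_ex_RInt _ _ _ Hs)) as E.
    replace (1 * 0 + 1) with 1 in E by ring. replace (1 * c + 1) with (c + 1) in E by ring.
    rewrite <- E. apply RInt_ext_R. intros x.
    replace (1 * x + 1) with (x + 1) by ring. rewrite Hp. apply Rmult_1_l. }
  rewrite <- (RInt_Chasles F c 0 (c + 1)), <- (RInt_Chasles F 0 1 (c + 1)), E1
    by now apply smooth_ex_RInt.
  rewrite <- (opp_RInt_swap F 0 c) by now apply smooth_ex_RInt.
  unfold plus, opp. simpl. ring_R.
Qed.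

Lemma RInt_Derive_periodic F : sfun F -> RInt (Derive F) 0 1 = 0.
Proof.
  intros [Hs Hp]. rewrite RInt_Derive.
  - rewrite <- (Rplus_0_l 1) at 1. rewrite Hp. ring_R.
  - intros; now apply smooth_ex_derive.
  - intros; now apply smooth_continuous, smooth_Derive.
Qed.

Lemma RInt_by_parts u w : sfun u -> sfun w ->
  RInt (fun x => u x * Derive w x) 0 1 = - RInt (fun x => Derive u x * w x) 0 1.
Proof.
  intros Hu Hw.
  pose proof (RInt_Derive_periodic _ (sfun_mult _ _ Hu Hw)) as E.
  rewrite (RInt_ext_R _ (fun x => Derive u x * w x + u x * Derive w x)) in E
    by (intros; apply Derive_mult; apply smooth_ex_derive; [apply Hu|apply Hw]).
  rewrite RInt_plus_smooth in E.
  - lra.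
  - apply smooth_mult; [apply smooth_Derive|]; [apply Hu|apply Hw].
  - apply smooth_mult; [|apply smooth_Derive]; [apply Hu|apply Hw].
Qed.

Lemma RInt_by_parts_n i : forall u w, sfun u -> sfun w ->
  RInt (fun x => u x * Derive_n w i x) 0 1 = (-1) ^ i * RInt (fun x => Derive_n u i x * w x) 0 1.
Proof.
  induction i as [|i IH]; intros u w Hu Hw; [simpl; ring_R|].
  simpl Derive_n at 1.
  rewrite RInt_by_parts, IH by auto using sfun_Derive, sfun_Derive_n.
  rewrite (RInt_ext_R (fun x => Derive_n (Derive u) i x * w x)
                      (fun x => Derive_n u (S i) x * w x)) by (intros; now rewrite Derive_n_S).
  simpl pow. ring_R.
Qed.

Definition adjoint (k : nat) (a : coeffs) (psi : R -> R) : R -> R :=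
  fun x => sum_n (fun i => (-1) ^ i * Derive_n (fun y => a i y * psi y) i x) k.

Lemma sfun_adjoint k a psi : sfun_coeffs a -> sfun psi -> sfun (adjoint k a psi).
Proof.
  intros Ha Hp. apply sfun_sum. intros i.
  apply sfun_scal, sfun_Derive_n. now apply sfun_mult.
Qed.

Lemma sfun_op k a psi : sfun_coeffs a -> sfun psi -> sfun (op k a psi).
Proof.
  intros Ha Hp. apply sfun_sum. intros i.
  apply sfun_mult; auto using sfun_Derive_n.
Qed.

Lemma RInt_adjoint k a u v : sfun_coeffs a -> sfun u -> sfun v ->
  RInt (fun x => u x * adjoint k a v x) 0 1 = RInt (fun x => v x * op k a u x) 0 1.
Proof.
  intros Ha Hu Hv.
  assert (Hav : forall i, sfun (fun y => a i y * v y)) by (intros; now apply sfun_mult).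
  assert (Term : forall i,
    RInt (fun x => (-1) ^ i * (u x * Derive_n (fun y => a i y * v y) i x)) 0 1 =
    RInt (fun x => Derive_n u i x * a i x * v x) 0 1).
  { intros i.
    rewrite RInt_scal_smooth, RInt_by_parts_n by
      (auto; apply (sfun_mult _ _ Hu (sfun_Derive_n _ i (Hav i)))).
    rewrite <- Rmult_assoc, <- Rpow_mult_distr.
    replace (-1 * -1) with 1 by ring. rewrite pow1, Rmult_1_l.
    apply RInt_ext_R. intros; ring. }
  unfold adjoint, op.
  rewrite (RInt_ext_R _ (fun x => sum_n (fun i =>
             (-1) ^ i * (u x * Derive_n (fun y => a i y * v y) i x)) k)).
  2:{ intros x. rewrite <- sum_n_scal_R. apply sum_n_ext_le. intros; ring_R. }
  rewrite (RInt_ext_R (fun x => v x * _)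
             (fun x => sum_n (fun i => Derive_n u i x * a i x * v x) k)).
  2:{ intros x. rewrite <- sum_n_scal_R. apply sum_n_ext_le. intros; ring_R. }
  rewrite !RInt_sum_smooth.
  - apply sum_n_ext_le. intros i _. apply Term.
  - intros i. exact (proj1 (sfun_mult _ _ (sfun_mult _ _ (sfun_Derive_n u i Hu) (Ha i)) Hv)).
  - intros i. exact (proj1 (sfun_scal _ _ (sfun_mult _ _ Hu (sfun_Derive_n _ i (Hav i))))).
Qed.

Lemma RInt_nonneg_eq_0 F a b : a < b -> (forall x, a <= x <= b -> continuous F x) ->
  (forall x, a <= x <= b -> 0 <= F x) -> RInt F a b = 0 -> forall x, a <= x <= b -> F x = 0.
Proof.
  intros Hab Hc Hp HI x1 Hx1.
  destruct (Rle_lt_or_eq_dec 0 (F x1) (Hp x1 Hx1)) as [Hlt|Heq]; [exfalso|auto].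
  destruct (proj1 (filterlim_locally F (F x1)) (Hc x1 Hx1) (mkposreal (F x1 / 2) ltac:(lra)))
    as [d Hd]. simpl in Hd.
  set (c := Rmax a (x1 - d / 2)). set (e := Rmin b (x1 + d / 2)).
  assert (Hd2 : 0 < d / 2) by (pose proof (cond_pos d); lra).
  assert (Hce : c < e) by (apply Rmax_lub_lt; apply Rmin_glb_lt; lra).
  assert (Hac : a <= c) by apply Rmax_l. assert (Heb : e <= b) by apply Rmin_l.
  assert (Hc' : x1 - d / 2 <= c) by apply Rmax_r. assert (He' : e <= x1 + d / 2) by apply Rmin_r.
  assert (Hcx : c <= x1 + d / 2) by (apply Rmax_lub; lra).
  assert (Hex : x1 - d / 2 <= e) by (apply Rmin_glb; lra).
  assert (Hex_RInt : forall u v, a <= u -> u <= v -> v <= b -> ex_RInt F u v).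
  { intros u v H1 H2 H3. apply (ex_RInt_continuous (V := R_CompleteNormedModule)).
    intros z Hz. apply Hc.
    rewrite Rmin_left in Hz by lra. rewrite Rmax_right in Hz by lra. lra. }
  assert (P1 : 0 <= RInt F a c) by (apply RInt_ge_0; auto; [apply Hex_RInt|intros; apply Hp]; lra).
  assert (P3 : 0 <= RInt F e b) by (apply RInt_ge_0; auto; [apply Hex_RInt|intros; apply Hp]; lra).
  assert (P2 : 0 < RInt F c e).
  { apply RInt_gt_0; auto; [|intros; apply Hc; lra].
    intros z Hz.
    assert (B : ball x1 d z).
    { unfold ball; simpl. unfold AbsRing_ball, abs, minus, plus, opp; simpl.
      apply Rabs_def1; lra. }
    specialize (Hd z B). unfold ball in Hd; simpl in Hd.
    unfold AbsRing_ball, abs, minus, plus, opp in Hd; simpl in Hd.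
    apply Rabs_def2 in Hd. lra. }
  rewrite <- (RInt_Chasles F a c b), <- (RInt_Chasles F c e b) in HI
    by (apply Hex_RInt; lra).
  unfold plus in HI; simpl in HI. lra.
Qed.

Lemma sfun_eq_0_of_weighted_square h w : sfun h -> sfun w -> (forall x, 0 < w x) ->
  RInt (fun x => w x * h x * h x) 0 1 = 0 -> forall x, h x = 0.
Proof.
  intros Hh Hw Hpos E x.
  assert (Hwhh : sfun (fun y => w y * h y * h y)) by (apply sfun_mult; [apply sfun_mult|]; auto).
  assert (Hnonneg : forall z, 0 <= w z * h z * h z).
  { intros z. rewrite Rmult_assoc. apply Rmult_le_pos; [apply Rlt_le, Hpos|apply Rle_0_sqr]. }
  assert (Z : w x * h x * h x = 0).
  { apply (RInt_nonneg_eq_0 (fun y => w y * h y * h y) x (x + 1)); try lra.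
    - intros z _. apply smooth_continuous, Hwhh.
    - intros z _. apply Hnonneg.
    - now rewrite RInt_period_shift. }
  rewrite Rmult_assoc in Z. apply Rmult_integral in Z as [Z|Z].
  - pose proof (Hpos x). lra.
  - now apply Rmult_integral in Z as [Z|Z].
Qed.

Lemma sfun_eq_0_of_pairing h : sfun h ->
  (forall w, sfun w -> RInt (fun x => w x * h x) 0 1 = 0) -> forall x, h x = 0.
Proof.
  intros Hh H. apply (sfun_eq_0_of_weighted_square h (fun _ => 1)); auto using sfun_const, Rlt_0_1.
  rewrite <- (H h Hh) at 2. apply RInt_ext_R. intros; ring.
Qed.

(** * Diffeomorphisms of the circle *)

Section Diffeomorphism.

Variable f : R -> R.
Hypothesis Hf : diffS1 f.

Lemma diffS1_smooth : smooth f.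
Proof. apply Hf. Qed.

Lemma diffS1_shift x : f (x + 1) = f x + 1.
Proof. apply Hf. Qed.

Lemma diffS1_Derive_pos x : 0 < Derive f x.
Proof. apply Hf. Qed.

Lemma diffS1_lt x y : x < y -> f x < f y.
Proof.
  intros Hxy.
  destruct (MVT_gen f x y (Derive f)) as [c [_ E]].
  - intros z _. apply Derive_correct, smooth_ex_derive, diffS1_smooth.
  - intros z _. apply continuity_pt_filterlim, smooth_continuous, diffS1_smooth.
  - pose proof (diffS1_Derive_pos c). nra.
Qed.

Lemma diffS1_le_inv x y : f x <= f y -> x <= y.
Proof. intros H. destruct (Rle_lt_dec x y) as [|Hyx]; auto. apply diffS1_lt in Hyx. lra. Qed.

Lemma diffS1_surj y : exists x, f x = y.
Proof.
  destruct (archimed (y - f 0)) as [A1 A2]. set (n := up (y - f 0)) in *.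
  assert (Fn : forall z, f (IZR z) = f 0 + IZR z).
  { intros z. rewrite <- (Rplus_0_l (IZR z)) at 1.
    rewrite (shift_Z f 1 diffS1_shift). ring. }
  assert (Fn2 : f (IZR n - 2) = f 0 + IZR n - 2).
  { replace (IZR n - 2) with (IZR (n - 2)) by now rewrite minus_IZR. rewrite Fn, minus_IZR. ring. }
  destruct (IVT_gen_consistent f (IZR n - 2) (IZR n) y) as [x [_ Hx]]; eauto.
  - intros; apply smooth_continuous, diffS1_smooth.
  - rewrite Fn, Fn2, Rmin_left, Rmax_right by lra. lra.
Qed.

Lemma periodic_Derive_diffS1 : periodic (Derive f).
Proof.
  apply (periodic_Derive_shift f 1); [apply smooth_ex_derive, diffS1_smooth|apply diffS1_shift].
Qed.

Lemma sfun_Derive_diffS1 : sfun (Derive f).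
Proof. split; [apply smooth_Derive, diffS1_smooth|apply periodic_Derive_diffS1]. Qed.

Lemma sfun_inv_Derive_diffS1 : sfun (fun x => / Derive f x).
Proof.
  split.
  - apply smooth_inv; [apply smooth_Derive, diffS1_smooth|].
    intros z. apply Rgt_not_eq, diffS1_Derive_pos.
  - intros y. now rewrite periodic_Derive_diffS1.
Qed.

Lemma sfun_comp_diffS1 phi : sfun phi -> sfun (fun x => phi (f x)).
Proof.
  intros [Hs Hp]. split; [apply smooth_comp; auto using diffS1_smooth|].
  intros x. rewrite diffS1_shift. apply Hp.
Qed.

Lemma RInt_comp_diffS1 F : sfun F -> RInt (fun x => Derive f x * F (f x)) 0 1 = RInt F 0 1.
Proof.
  intros HF.
  assert (E : f 1 = f 0 + 1) by (rewrite <- diffS1_shift; f_equal; ring).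
  rewrite <- (RInt_period_shift F (f 0) HF), <- E.
  rewrite <- (RInt_comp F f (Derive f) 0 1).
  - apply RInt_ext_R. intros x. reflexivity.
  - intros; apply smooth_continuous, HF.
  - intros x _. split.
    + apply Derive_correct, smooth_ex_derive, diffS1_smooth.
    + apply smooth_continuous, smooth_Derive, diffS1_smooth.
Qed.

Lemma diffS1_bijective : exists g, (forall y, f (g y) = y) /\ (forall x, g (f x) = x).
Proof.
  destruct (choice (fun y x => f x = y) diffS1_surj) as [g Hg].
  exists g. split; auto.
  intros x. pose proof (Hg (f x)). apply Rle_antisym; apply diffS1_le_inv; lra.
Qed.

Section Inverse.

Variable g : R -> R.
Hypothesis Hfg : forall y, f (g y) = y.
Hypothesis Hgf : forall x, g (f x) = x.

Lemma inverse_le x y : x <= y -> g x <= g y.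
Proof. intros H. apply diffS1_le_inv. now rewrite !Hfg. Qed.

Lemma inverse_is_derive y : is_derive g y (/ Derive f (g y)).
Proof.
  apply is_derive_Reals.
  assert (Cg : continuity_pt g y).
  { apply (Ranalysis5.continuity_pt_recip_interv f g (g y - 1) (g y + 1)); try lra.
    - intros; now apply diffS1_lt.
    - intros. apply Hfg.
    - intros x H1 H2. split; apply diffS1_le_inv; rewrite Hfg; auto.
    - intros. apply continuity_pt_filterlim, smooth_continuous, diffS1_smooth.
    - pose proof (diffS1_lt (g y - 1) (g y) ltac:(lra)).
      pose proof (diffS1_lt (g y) (g y + 1) ltac:(lra)). rewrite Hfg in *. lra. }
  assert (Df : forall a, g (y - 1) <= a <= g (y + 1) -> derivable_pt f a).
  { intros a _. apply ex_derive_Reals_0, smooth_ex_derive, diffS1_smooth. }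
  assert (Pi : g (y - 1) <= g y <= g (y + 1)) by (split; apply inverse_le; lra).
  pose proof (Ranalysis5.derivable_pt_lim_recip_interv f g (y - 1) (y + 1) y Df Cg
                ltac:(lra) ltac:(lra) Pi) as L.
  rewrite Derive_Reals in L. rewrite <- Rmult_1_l. apply L.
  - intros; apply Hfg.
  - apply Rgt_not_eq, diffS1_Derive_pos.
Qed.

Lemma inverse_smooth : smooth g.
Proof.
  assert (Sm : forall h, smooth h -> smooth (fun y => h (g y))).
  { intros h0 Hh0.
    apply (gen_alg_smooth (fun u => smooth u \/ exists h, smooth h /\ u = fun y => h (g y)));
      [|apply gen_alg_gen; right; eauto].
    intros u [Hu|[h [Hh ->]]].
    - split; [now apply smooth_ex_derive|apply gen_alg_gen; left; now apply smooth_Derive].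
    - split.
      { intros x. apply ex_derive_comp; [now apply smooth_ex_derive|].
        eexists; apply inverse_is_derive. }
      apply gen_alg_gen. right. exists (fun x => Derive h x * / Derive f x). split.
      + apply smooth_mult; [now apply smooth_Derive|apply sfun_inv_Derive_diffS1].
      + apply functional_extensionality. intros y. apply is_derive_unique.
        replace (Derive h (g y) * / Derive f (g y))
          with (scal (/ Derive f (g y)) (Derive h (g y))) by apply Rmult_comm.
        apply (is_derive_comp h g); [|apply inverse_is_derive].
        apply Derive_correct, smooth_ex_derive, Hh. }
  exact (Sm _ smooth_id).
Qed.

Lemma inverse_shift y : g (y + 1) = g y + 1.
Proof. rewrite <- (Hgf (g y + 1)), diffS1_shift, Hfg. reflexivity. Qed.

End Inverse.

(* [act_rel] is the naturality of the pairing [RInt (psi * A phi)] of functions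
   with 1-forms; the formal adjoint therefore inherits it. *)
Section AdjointNatural.

Variables (k : nat) (a b : coeffs).
Hypotheses (Ha : Dk k a) (Hb : Dk k b) (Hab : act_rel k f a b).
Variable phi : R -> R.
Hypothesis Hphi : sfun phi.

Let defect x := Derive f x * adjoint k b phi (f x) - adjoint k a (fun y => phi (f y)) x.

Lemma sfun_defect : sfun defect.
Proof.
  apply sfun_plus; [apply sfun_mult|apply sfun_opp].
  - apply sfun_Derive_diffS1.
  - apply sfun_comp_diffS1, sfun_adjoint; auto. exact (Dk_sfun k b Hb).
  - apply sfun_adjoint; [exact (Dk_sfun k a Ha)|now apply sfun_comp_diffS1].
Qed.

Lemma RInt_comp_mult_defect chi : sfun chi -> RInt (fun x => chi (f x) * defect x) 0 1 = 0.
Proof.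
  intros Hchi.
  assert (Ha' := Dk_sfun k a Ha). assert (Hb' := Dk_sfun k b Hb).
  assert (Hcf := sfun_comp_diffS1 chi Hchi). assert (Hpf := sfun_comp_diffS1 phi Hphi).
  assert (E1 : RInt (fun x => chi (f x) * adjoint k a (fun y => phi (f y)) x) 0 1 =
               RInt (fun x => phi x * op k b chi x) 0 1).
  { rewrite RInt_adjoint by auto.
    rewrite <- (RInt_comp_diffS1 (fun x => phi x * op k b chi x))
      by (apply sfun_mult; auto using sfun_op).
    apply RInt_ext_R. intros x. rewrite <- (Hab chi Hchi x). ring. }
  assert (E2 : RInt (fun x => chi (f x) * (Derive f x * adjoint k b phi (f x))) 0 1 =
               RInt (fun x => chi x * adjoint k b phi x) 0 1).
  { rewrite <- (RInt_comp_diffS1 (fun x => chi x * adjoint k b phi x))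
      by (apply sfun_mult; auto using sfun_adjoint).
    apply RInt_ext_R. intros x. ring. }
  assert (S1 : sfun (fun x => chi (f x) * (Derive f x * adjoint k b phi (f x)))).
  { apply sfun_mult, sfun_mult; auto using sfun_Derive_diffS1.
    apply sfun_comp_diffS1, sfun_adjoint; auto. }
  assert (S2 : sfun (fun x => chi (f x) * adjoint k a (fun y => phi (f y)) x)).
  { apply sfun_mult; auto using sfun_adjoint. }
  unfold defect.
  rewrite (RInt_ext_R _ (fun x => chi (f x) * (Derive f x * adjoint k b phi (f x)) +
             -1 * (chi (f x) * adjoint k a (fun y => phi (f y)) x))) by (intros; ring).
  rewrite RInt_plus_smooth, RInt_scal_smooth, E1, E2, RInt_adjoint; auto.
  - ring_R.
  - apply S2.
  - apply S1.
  - apply smooth_scal, S2.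
Qed.

Lemma adjoint_natural x : Derive f x * adjoint k b phi (f x) = adjoint k a (fun y => phi (f y)) x.
Proof.
  destruct diffS1_bijective as [g [Hfg Hgf]].
  assert (Hchi : sfun (fun y => / Derive f (g y) * defect (g y))).
  { split.
    - apply (smooth_comp (fun z => / Derive f z * defect z) g); [|exact (inverse_smooth g Hfg)].
      apply smooth_mult; [exact (proj1 sfun_inv_Derive_diffS1)|exact (proj1 sfun_defect)].
    - intros y. rewrite (inverse_shift g Hfg Hgf), periodic_Derive_diffS1, (proj2 sfun_defect).
      reflexivity. }
  cut (defect x = 0); [unfold defect; lra|].
  apply (sfun_eq_0_of_weighted_square defect (fun x => / Derive f x));
    auto using sfun_defect, sfun_inv_Derive_diffS1.
  - intros z. apply Rinv_0_lt_compat, diffS1_Derive_pos.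
  - rewrite <- (RInt_comp_mult_defect _ Hchi) at 2. apply RInt_ext_R. intros z. rewrite Hgf. ring.
Qed.

End AdjointNatural.

End Diffeomorphism.

Lemma Dk_plus k a c : Dk k a -> Dk k c -> Dk k (fun i x => a i x + c i x).
Proof.
  intros Ha Hc. apply Dk_intro.
  - intros j. apply sfun_plus; [exact (Dk_sfun k a Ha j)|exact (Dk_sfun k c Hc j)].
  - intros j x Hj. rewrite (Dk_order_le k a), (Dk_order_le k c) by auto. ring.
Qed.

Lemma Dk_scal k r a : Dk k a -> Dk k (fun i x => r * a i x).
Proof.
  intros Ha. apply Dk_intro.
  - intros j. apply sfun_scal, (Dk_sfun k a Ha j).
  - intros j x Hj. rewrite (Dk_order_le k a) by auto. ring.
Qed.

Lemma Dk_mult_fun k a w : Dk k a -> sfun w -> Dk k (fun i x => a i x * w x).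
Proof.
  intros Ha Hw. apply Dk_intro.
  - intros j. apply sfun_mult; [exact (Dk_sfun k a Ha j)|exact Hw].
  - intros j x Hj. rewrite (Dk_order_le k a) by auto. ring.
Qed.

Lemma Dk_of_order_0 k c : sfun (c 0%nat) -> order_le 0 c -> Dk k c.
Proof.
  intros H0 H. apply Dk_intro; [|intros j x Hj; apply H; lia].
  intros [|j]; [exact H0|].
  apply sfun_ext with (fun _ => 0); [intros; rewrite H; auto; lia|apply sfun_const].
Qed.

Lemma Dk_of_order_1 k c : (1 <= k)%nat -> sfun (c 0%nat) -> sfun (c 1%nat) ->
  order_le 1 c -> Dk k c.
Proof.
  intros Hk H0 H1 H. apply Dk_intro; [|intros j x Hj; apply H; lia].
  intros [|[|j]]; auto.
  apply sfun_ext with (fun _ => 0); [intros; rewrite H; auto; lia|apply sfun_const].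
Qed.

Lemma order_le_P0 k a : order_le 1 (P0 k a).
Proof. intros [|[|i]] x H; [lia|lia|reflexivity]. Qed.

Lemma order_le_P0s k a : order_le 1 (P0s k a).
Proof. intros [|[|i]] x H; [lia|lia|reflexivity]. Qed.

Lemma order_le_P1 k a : order_le 1 (P1 k a).
Proof. intros [|[|i]] x H; [lia|lia|reflexivity]. Qed.

Lemma order_le_Lmap k a : order_le 1 (Lmap k a).
Proof. intros [|[|i]] x H; [lia|lia|reflexivity]. Qed.

Lemma op_order_0 k c g x : order_le 0 c -> op k c g x = c 0%nat x * g x.
Proof.
  intros H. rewrite (op_trunc 0 k); [|intros j y Hj; apply H; lia|lia].
  unfold op. now rewrite sum_n_0.
Qed.

Lemma op_order_1 k c g x : (1 <= k)%nat -> order_le 1 c ->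
  op k c g x = c 0%nat x * g x + c 1%nat x * Derive g x.
Proof.
  intros Hk H. rewrite (op_trunc 1 k) by auto.
  unfold op. now rewrite sum_n_S, sum_n_0.
Qed.

Lemma adjoint_order_1 k c g x : (1 <= k)%nat -> order_le 1 c ->
  adjoint k c g x = c 0%nat x * g x - Derive (fun y => c 1%nat y * g y) x.
Proof.
  intros Hk H. unfold adjoint. rewrite (sum_n_trunc _ 1 k), sum_n_S, sum_n_0; [simpl; ring_R|auto|].
  intros i Hi.
  rewrite (Derive_n_ext _ (fun _ => 0)), Derive_n_zero by (intros; rewrite H; auto; ring).
  ring.
Qed.

Lemma op_plus_coeffs k a c g x : op k (fun i y => a i y + c i y) g x = op k a g x + op k c g x.
Proof. unfold op. rewrite <- sum_n_plus_R. apply sum_n_ext_le. intros; ring. Qed.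

Lemma op_scal_coeffs k r a g x : op k (fun i y => r * a i y) g x = r * op k a g x.
Proof. unfold op. rewrite <- sum_n_scal_R. apply sum_n_ext_le. intros; ring. Qed.

Lemma adjoint_plus_coeffs k a c g x : smooth_coeffs a -> smooth_coeffs c -> smooth g ->
  adjoint k (fun i y => a i y + c i y) g x = adjoint k a g x + adjoint k c g x.
Proof.
  intros Ha Hc Hg. unfold adjoint. rewrite <- sum_n_plus_R. apply sum_n_ext_le. intros i _.
  rewrite (Derive_n_ext _ (fun y => a i y * g y + c i y * g y)) by (intros; ring).
  rewrite Derive_n_plus_smooth by auto using smooth_mult. ring.
Qed.

Lemma adjoint_scal_coeffs k r a g x : adjoint k (fun i y => r * a i y) g x = r * adjoint k a g x.
Proof.
  unfold adjoint. rewrite <- sum_n_scal_R. apply sum_n_ext_le. intros i _.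
  rewrite (Derive_n_ext _ (fun y => r * (a i y * g y))) by (intros; ring).
  rewrite Derive_n_scal_l. ring.
Qed.

Lemma op_Cmap k a g x : Dk k a -> sfun g -> op k (Cmap k a) g x = adjoint k a g x.
Proof. intros Ha Hg. destruct (Cmap_spec k a Ha) as [_ E]. now rewrite E. Qed.

Lemma Cspec_of_adjoint k a b : Dk k b ->
  (forall g, sfun g -> forall x, op k b g x = adjoint k a g x) -> Cspec k a b.
Proof.
  intros Hb H. split; auto.
  intros g Hg. apply functional_extensionality. intros x. now apply H.
Qed.

Lemma in_Ik_eqmap k T S : eqmap k T S -> in_Ik k S -> in_Ik k T.
Proof.
  intros E [H1 [H2 [H3 H4]]]. split; [|split; [|split]].
  - intros a Ha. rewrite E; auto.
  - intros a c Ha Hc. rewrite !E; auto using Dk_plus.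
  - intros r a Ha. rewrite !E; auto using Dk_scal.
  - intros f Hf a b Ha Hb Hab. rewrite !E; auto.
Qed.

Lemma in_Ik_mcomp k T S : in_Ik k T -> in_Ik k S -> in_Ik k (mcomp T S).
Proof.
  intros [T1 [T2 [T3 T4]]] [S1 [S2 [S3 S4]]]. unfold mcomp. split; [|split; [|split]].
  - auto.
  - intros a c Ha Hc. rewrite S2; auto.
  - intros r a Ha. rewrite S3; auto.
  - intros f Hf a b Ha Hb Hab. apply T4; auto.
Qed.

Lemma op_one k c x : op k c (fun _ => 1) x = c 0%nat x.
Proof.
  unfold op. rewrite (sum_n_trunc _ 0 k), sum_n_0; [simpl; ring_R|lia|].
  intros i Hi. destruct i; [lia|]. rewrite Derive_n_const. ring.
Qed.

(* [a_0 dx] transforms as a 1-form. *)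
Lemma act_rel_coeff0 k f a b : act_rel k f a b ->
  forall x, Derive f x * b 0%nat (f x) = a 0%nat x.
Proof.
  intros H x. pose proof (H (fun _ => 1) (sfun_const 1) x) as E.
  now rewrite !op_one in E.
Qed.

Lemma Cmap_plus k a c : Dk k a -> Dk k c ->
  Cmap k (fun i x => a i x + c i x) = (fun i x => Cmap k a i x + Cmap k c i x).
Proof.
  intros Ha Hc. apply Cmap_eq; [now apply Dk_plus|].
  apply Cspec_of_adjoint; [apply Dk_plus; now apply Dk_Cmap|].
  intros g Hg x. rewrite op_plus_coeffs, !op_Cmap, adjoint_plus_coeffs by
    (auto; apply Hg || eapply Dk_smooth; eauto).
  reflexivity.
Qed.

Lemma Cmap_scal k r a : Dk k a -> Cmap k (fun i x => r * a i x) = (fun i x => r * Cmap k a i x).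
Proof.
  intros Ha. apply Cmap_eq; [now apply Dk_scal|].
  apply Cspec_of_adjoint; [apply Dk_scal; now apply Dk_Cmap|].
  intros g Hg x. rewrite op_scal_coeffs, !op_Cmap, adjoint_scal_coeffs by auto using Dk_scal.
  reflexivity.
Qed.

Lemma in_Ik_Cmap k : in_Ik k (Cmap k).
Proof.
  split; [|split; [|split]].
  - apply Dk_Cmap.
  - apply Cmap_plus.
  - intros; now apply Cmap_scal.
  - intros f Hf a b Ha Hb Hab phi Hphi x.
    rewrite !op_Cmap by auto using sfun_comp_diffS1.
    now apply adjoint_natural.
Qed.

Lemma Dk_P0 k a : Dk k a -> Dk k (P0 k a).
Proof.
  intros Ha. apply Dk_of_order_0; [exact (Dk_sfun k a Ha 0%nat)|].
  intros [|i] x H; [lia|reflexivity].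
Qed.

Lemma in_Ik_P0 k : in_Ik k (P0 k).
Proof.
  split; [|split; [|split]].
  - apply Dk_P0.
  - intros a c Ha Hc. apply coeffs_ext. intros [|i] x; simpl; auto. ring.
  - intros r a Ha. apply coeffs_ext. intros [|i] x; simpl; auto. ring.
  - intros f Hf a b Ha Hb Hab phi Hphi x.
    rewrite !op_order_0 by (intros [|i] y H; [lia|reflexivity]).
    simpl. rewrite <- (act_rel_coeff0 k f a b Hab). ring.
Qed.

Lemma P0s_Cmap k a x : Dk k a -> P0s k a 0%nat x = Cmap k a 0%nat x.
Proof.
  intros Ha. rewrite <- (op_one k (Cmap k a)), op_Cmap by auto using sfun_const.
  unfold adjoint, P0s. apply sum_n_ext_le. intros i _.
  f_equal. apply Derive_n_ext. intros; ring.
Qed.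

Lemma P0_C k : eqmap k (mcomp (P0 k) (Cmap k)) (P0s k).
Proof.
  intros a Ha. apply coeffs_ext. intros [|i] x; [symmetry; now apply P0s_Cmap|reflexivity].
Qed.

Lemma in_Ik_P0s k : in_Ik k (P0s k).
Proof.
  apply (in_Ik_eqmap k _ (mcomp (P0 k) (Cmap k))).
  - intros a Ha. symmetry. now apply P0_C.
  - apply in_Ik_mcomp; [apply in_Ik_P0|apply in_Ik_Cmap].
Qed.

Lemma Dk_P0s k a : Dk k a -> Dk k (P0s k a).
Proof. apply (proj1 (in_Ik_P0s k)). Qed.

(** * A partition of unity by functions vanishing to high order *)

Definition sin2_at (y0 y : R) := sin (PI * y + - (PI * y0)) ^ 2.
Definition cos2_at (y0 y : R) := cos (PI * y + - (PI * y0)) ^ 2.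

Lemma sfun_sin2_at y0 : sfun (sin2_at y0).
Proof.
  split; [apply smooth_pow; exact (proj1 (smooth_sin_cos PI (- (PI * y0))))|].
  intros y. unfold sin2_at.
  replace (PI * (y + 1) + - (PI * y0)) with (PI * y + - (PI * y0) + PI) by ring.
  rewrite neg_sin. ring.
Qed.

Lemma sfun_cos2_at y0 : sfun (cos2_at y0).
Proof.
  split; [apply smooth_pow; exact (proj2 (smooth_sin_cos PI (- (PI * y0))))|].
  intros y. unfold cos2_at.
  replace (PI * (y + 1) + - (PI * y0)) with (PI * y + - (PI * y0) + PI) by ring.
  rewrite neg_cos. ring.
Qed.

Lemma sin2_at_root y0 : sin2_at y0 y0 = 0.
Proof. unfold sin2_at. replace (PI * y0 + - (PI * y0)) with 0 by ring. rewrite sin_0. ring. Qed.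

Lemma cos2_at_root y0 : cos2_at y0 (y0 + / 2) = 0.
Proof.
  unfold cos2_at. replace (PI * (y0 + / 2) + - (PI * y0)) with (PI / 2) by (unfold Rdiv; ring).
  rewrite cos_PI2. ring.
Qed.

(* Expand [1 = (sin^2 + cos^2)^(2N)] binomially: each term has a factor
   [sin^(2t)] or [cos^(2(2N-t))] with exponent at least [N]. *)
Lemma one_ind_flat N y0 (P : (R -> R) -> Prop) :
  (forall w1 w2, sfun w1 -> sfun w2 -> P w1 -> P w2 -> P (fun y => w1 y + w2 y)) ->
  (forall w, sfun w -> flat w N y0 \/ flat w N (y0 + / 2) -> P w) ->
  P (fun _ => 1).
Proof.
  intros Hplus Hbase.
  set (M := (2 * N)%nat).
  set (w := fun t y => sin2_at y0 y ^ t * (cos2_at y0 y ^ (M - t) * Binomial.C M t)).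
  assert (Ws : forall t, sfun (w t)).
  { intros t. apply sfun_mult; [|apply sfun_mult];
      auto using sfun_pow, sfun_const, sfun_sin2_at, sfun_cos2_at. }
  assert (Hsin := proj1 (sfun_sin2_at y0)). assert (Hcos := proj1 (sfun_cos2_at y0)).
  assert (Wt : forall t, P (w t)).
  { intros t. apply Hbase; auto. destruct (le_lt_dec N t) as [Ht|Ht]; [left|right].
    - apply flat_mult_r; auto using smooth_pow, smooth_mult, smooth_const.
      apply flat_le with t; auto.
      apply (flat_pow_root _ y0 Hsin (sin2_at_root y0) t).
    - apply flat_mult_l; auto using smooth_pow, smooth_mult, smooth_const.
      apply flat_mult_r; auto using smooth_pow, smooth_const.
      apply flat_le with (M - t)%nat; [|unfold M; lia].
      apply (flat_pow_root _ (y0 + / 2) Hcos (cos2_at_root y0) (M - t)). }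
  assert (Psum : forall m, P (fun y => sum_n (fun t => w t y) m)).
  { induction m as [|m IH].
    - replace (fun y => sum_n (fun t => w t y) 0) with (w 0%nat); auto.
      apply functional_extensionality; intros; now rewrite sum_n_0.
    - replace (fun y => sum_n (fun t => w t y) (S m))
        with (fun y => sum_n (fun t => w t y) m + w (S m) y)
        by (apply functional_extensionality; intros; now rewrite sum_n_S).
      apply Hplus; auto using sfun_sum. }
  replace (fun _ : R => 1) with (fun y => sum_n (fun t => w t y) M); [apply Psum|].
  apply functional_extensionality; intros y.
  rewrite sum_n_Reals, <- (pow1 M).
  replace 1 with (sin2_at y0 y + cos2_at y0 y)
    by (unfold sin2_at, cos2_at; rewrite <- (sin2_cos2 (PI * y + - (PI * y0))); unfold Rsqr; ring).
  rewrite binomial. apply sum_eq. intros t _. unfold w. ring.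
Qed.

Lemma Cmap_involutive k a : Dk k a -> Cmap k (Cmap k a) = a.
Proof.
  intros Ha. assert (HC := Dk_Cmap k a Ha).
  apply Cmap_eq; auto. apply Cspec_of_adjoint; auto.
  intros g Hg x.
  set (h := fun x => op k a g x - adjoint k (Cmap k a) g x).
  assert (Hh : sfun h).
  { apply sfun_plus; [apply sfun_op|apply sfun_opp, sfun_adjoint]; auto; eapply Dk_sfun; eauto. }
  cut (h x = 0); [unfold h; lra|]. revert x.
  apply sfun_eq_0_of_pairing; auto. intros w Hw.
  assert (Hwa : sfun (fun x => w x * adjoint k (Cmap k a) g x))
    by (apply sfun_mult, sfun_adjoint; auto; eapply Dk_sfun; eauto).
  assert (Hwo : sfun (fun x => w x * op k a g x))
    by (apply sfun_mult, sfun_op; auto; eapply Dk_sfun; eauto).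
  rewrite (RInt_ext_R _ (fun x => w x * op k a g x + -1 * (w x * adjoint k (Cmap k a) g x)))
    by (intros; unfold h; ring).
  rewrite RInt_plus_smooth, RInt_scal_smooth by (apply Hwo || apply Hwa || apply smooth_scal, Hwa).
  rewrite RInt_adjoint, <- (RInt_adjoint k a) by (auto; eapply Dk_sfun; eauto).
  rewrite (RInt_ext_R (fun x => g x * op k (Cmap k a) w x) (fun x => g x * adjoint k a w x))
    by (intros; now rewrite op_Cmap).
  ring_R.
Qed.

Lemma Derive_zero_const h : (forall x, ex_derive h x) -> (forall x, Derive h x = 0) ->
  forall x y, h x = h y.
Proof.
  intros Hd H0 x y.
  destruct (MVT_gen h x y (Derive h)) as [c [_ E]].
  - intros z _. now apply Derive_correct.
  - intros z _. apply continuity_pt_filterlim, (ex_derive_continuous h z (Hd z)).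
  - rewrite H0 in E. lra.
Qed.

Lemma sfun_P1 k a : Dk k a -> sfun (P1 k a 1%nat).
Proof.
  intros Ha. apply sfun_sum. intros j.
  apply sfun_scal, sfun_Derive_n, (Dk_sfun k a Ha).
Qed.

Lemma ex_derive_P1 k a x : Dk k a -> ex_derive (P1 k a 1%nat) x.
Proof. intros Ha. apply smooth_ex_derive, (sfun_P1 k a Ha). Qed.

Lemma Dk_P1 k a : (1 <= k)%nat -> Dk k a -> Dk k (P1 k a).
Proof.
  intros Hk Ha. apply Dk_of_order_1; [exact Hk| |now apply sfun_P1|].
  - change (P1 k a 0%nat) with (fun _ : R => 0). apply sfun_const.
  - apply order_le_P1.
Qed.

Lemma Derive_P1 k a x : (1 <= k)%nat -> Dk k a ->
  Derive (P1 k a 1%nat) x = a 0%nat x - P0s k a 0%nat x.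
Proof.
  intros Hk Ha. destruct k as [|k]; [lia|].
  unfold P0s, P1. replace (S k - 1)%nat with k by lia.
  rewrite sum_n_first. simpl pow. rewrite Rmult_1_l.
  change (Derive (fun y => sum_n (fun j => (-1) ^ j * Derive_n (a (S j)) j y) k) x) with
    (Derive_n (fun y => sum_n (fun j => (fun z => (-1) ^ j * Derive_n (a (S j)) j z) y) k) 1 x).
  rewrite Derive_n_sum_smooth
    by (intros j; apply smooth_scal, smooth_Derive_n, (Dk_smooth (S k) a Ha)).
  rewrite (sum_n_ext_le (fun i => -1 * (-1) ^ i * Derive_n (a (S i)) (S i) x)
                        (fun i => -1 * ((-1) ^ i * Derive_n (a (S i)) (S i) x))) by (intros; ring).
  rewrite sum_n_scal_R.
  rewrite (sum_n_ext_le (fun i => Derive_n (fun z => (-1) ^ i * Derive_n (a (S i)) i z) 1 x)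
                        (fun i => (-1) ^ i * Derive_n (a (S i)) (S i) x))
    by (intros j _; simpl; now rewrite Derive_scal).
  change (Derive_n (a 0%nat) 0 x) with (a 0%nat x). ring_R.
Qed.

Lemma P1_plus k a c : Dk k a -> Dk k c ->
  P1 k (fun i x => a i x + c i x) = (fun i x => P1 k a i x + P1 k c i x).
Proof.
  intros Ha Hc. apply coeffs_ext. intros [|[|i]] x; simpl; try ring.
  rewrite <- sum_n_plus_R. apply sum_n_ext_le. intros j _.
  rewrite Derive_n_plus_smooth by (exact (Dk_smooth k a Ha _) || exact (Dk_smooth k c Hc _)).
  ring.
Qed.

Lemma P1_scal k r a : P1 k (fun i x => r * a i x) = (fun i x => r * P1 k a i x).
Proof.
  apply coeffs_ext. intros [|[|i]] x; simpl; try ring.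
  rewrite <- sum_n_scal_R. apply sum_n_ext_le. intros j _.
  rewrite Derive_n_scal_l. ring.
Qed.

Lemma flat_deriv_coeffs c n x0 : smooth_coeffs c -> (forall j, flat (c j) (S n) x0) ->
  forall j, flat (deriv_coeffs c j) n x0.
Proof.
  intros Hc H j. unfold deriv_coeffs.
  apply flat_plus; [apply smooth_Derive, Hc|destruct j; [apply smooth_const|apply Hc]| |].
  - apply flat_S, H.
  - destruct j; [apply flat_zero|apply flat_le with (S n); auto].
Qed.

Lemma flat_Dn_mult_coeffs a n x0 : smooth a -> flat a n x0 ->
  forall i j, flat (Dn_mult_coeffs i a j) (n - i) x0.
Proof.
  intros Ha H i. induction i as [|i IH]; intros j.
  - rewrite Nat.sub_0_r. destruct j; [exact H|apply flat_zero].
  - destruct (le_lt_dec n i); [replace (n - S i)%nat with 0%nat by lia; apply flat_0|].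
    apply flat_deriv_coeffs; [now apply smooth_Dn_mult_coeffs|].
    intros j'. replace (S (n - S i)) with (n - i)%nat by lia. apply IH.
Qed.

Lemma P1_flat k a x0 : (1 <= k)%nat -> (forall i, flat (a i) k x0) -> P1 k a 1%nat x0 = 0.
Proof. intros Hk H. apply sum_n_zero. intros j Hj. rewrite H; [ring|lia]. Qed.

Lemma P1_Cmap_flat k a x0 : (1 <= k)%nat -> Dk k a -> (forall i, flat (a i) (2 * k) x0) ->
  P1 k (Cmap k a) 1%nat x0 = 0.
Proof.
  intros Hk Ha H. rewrite Cmap_C_coeffs by auto. apply sum_n_zero. intros j Hj.
  unfold C_coeffs.
  rewrite Derive_n_sum_smooth
    by (intros i; apply smooth_scal, smooth_Dn_mult_coeffs, (Dk_smooth k a Ha)).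
  rewrite sum_n_zero; [ring|]. intros i Hi.
  rewrite Derive_n_scal_l, (flat_Dn_mult_coeffs (a i) (2 * k) x0); [ring|..|lia];
    auto; apply (Dk_smooth k a Ha).
Qed.

Lemma P1_Cmap_add_const k a : (1 <= k)%nat -> Dk k a ->
  forall x y, P1 k (Cmap k a) 1%nat x + P1 k a 1%nat x = P1 k (Cmap k a) 1%nat y + P1 k a 1%nat y.
Proof.
  intros Hk Ha. assert (HC := Dk_Cmap k a Ha).
  apply Derive_zero_const.
  - intros x. apply (ex_derive_plus (P1 k (Cmap k a) 1%nat) (P1 k a 1%nat)); now apply ex_derive_P1.
  - intros x.
    rewrite Derive_plus, !Derive_P1, !P0s_Cmap, Cmap_involutive by auto using ex_derive_P1.
    ring.
Qed.

(* Both sides are local, so [P1 (C A) + P1 A] vanishes wherever the coefficients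
   of [A] vanish to high order; being constant, it vanishes everywhere once
   [A] is split by the partition of unity [one_ind_flat]. *)
Lemma P1_Cmap k a x : (1 <= k)%nat -> Dk k a -> P1 k (Cmap k a) 1%nat x = - P1 k a 1%nat x.
Proof.
  intros Hk Ha.
  set (Zero := fun w => sfun w -> forall x, P1 k (Cmap k (fun i y => a i y * w y)) 1%nat x +
                                           P1 k (fun i y => a i y * w y) 1%nat x = 0).
  assert (Z1 : Zero (fun _ => 1)).
  { apply (one_ind_flat (2 * k) 0).
    - intros w1 w2 H1 H2 Z1 Z2 _ y.
      replace (fun i y => a i y * (w1 y + w2 y)) with
        (fun i y => (fun i y => a i y * w1 y) i y + (fun i y => a i y * w2 y) i y)
        by (apply coeffs_ext; intros; ring).
      rewrite Cmap_plus, !P1_plus by auto using Dk_mult_fun, Dk_Cmap.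
      specialize (Z1 H1 y). specialize (Z2 H2 y). lra.
    - intros w Hw Hflat _ y. assert (Hd := Dk_mult_fun k a w Ha Hw).
      assert (Local : forall p, flat w (2 * k) p -> Zero w).
      { intros p Hp _ z.
        assert (F : forall m, (m <= 2 * k)%nat -> forall i, flat (fun y => a i y * w y) m p).
        { intros m Hm i. apply flat_mult_l; [exact (Dk_smooth k a Ha i)|apply Hw|].
          now apply flat_le with (2 * k)%nat. }
        assert (F2k := F (2 * k)%nat (le_n _)). assert (Fk := F k ltac:(lia)).
        rewrite (P1_Cmap_add_const k _ Hk Hd z p), P1_Cmap_flat, P1_flat by auto. ring. }
      destruct Hflat as [Hp|Hp]; exact (Local _ Hp Hw y). }
  specialize (Z1 (sfun_const 1) x). cbv beta in Z1.
  replace (fun i y => a i y * 1) with a in Z1 by (apply coeffs_ext; intros; ring). lra.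
Qed.

Lemma act_rel_mult_fun k f a b w : act_rel k f a b ->
  act_rel k f (fun i y => a i y * w (f y)) (fun i y => b i y * w y).
Proof.
  intros Hab phi Hphi y. unfold op.
  rewrite (sum_n_ext_le (fun i => b i (f y) * w (f y) * _)
             (fun i => w (f y) * (b i (f y) * Derive_n phi i (f y)))) by (intros; ring).
  rewrite (sum_n_ext_le (fun i => a i y * w (f y) * _)
             (fun i => w (f y) * (a i y * Derive_n (fun z => phi (f z)) i y))) by (intros; ring).
  rewrite !sum_n_scal_R.
  fold (op k b phi (f y)). fold (op k a (fun z => phi (f z)) y).
  rewrite <- (Hab phi Hphi y). ring.
Qed.

Section P1Natural.

Variables (k : nat) (f : R -> R).
Hypotheses (Hk : (1 <= k)%nat) (Hf : diffS1 f).

(* Both [a_0 dx] and [P0^* A dx] are natural, hence so is [d (P1 A)]. *)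
Lemma P1_natural_sub_const a b : Dk k a -> Dk k b -> act_rel k f a b ->
  forall x y, P1 k b 1%nat (f x) - P1 k a 1%nat x = P1 k b 1%nat (f y) - P1 k a 1%nat y.
Proof.
  intros Ha Hb Hab.
  assert (Hfd := smooth_ex_derive f (diffS1_smooth f Hf)).
  apply Derive_zero_const.
  - intros x. apply (ex_derive_minus (fun x => P1 k b 1%nat (f x)) (P1 k a 1%nat));
      [apply ex_derive_comp|]; auto using ex_derive_P1.
  - intros x.
    rewrite Derive_minus, (Derive_comp (P1 k b 1%nat) f x), !Derive_P1
      by auto using ex_derive_P1, ex_derive_comp.
    pose proof (act_rel_coeff0 k f a b Hab x) as N1.
    assert (HP0s := proj2 (proj2 (proj2 (in_Ik_P0s k))) f Hf a b Ha Hb Hab).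
    pose proof (act_rel_coeff0 k f _ _ HP0s x) as N2.
    rewrite <- N1, <- N2. ring.
Qed.

Lemma P1_natural a b x : Dk k a -> Dk k b -> act_rel k f a b -> P1 k b 1%nat (f x) = P1 k a 1%nat x.
Proof.
  intros Ha Hb Hab.
  set (Zero := fun w => sfun w -> forall x,
    P1 k (fun i y => b i y * w y) 1%nat (f x) - P1 k (fun i y => a i y * w (f y)) 1%nat x = 0).
  assert (Z1 : Zero (fun _ => 1)).
  { apply (one_ind_flat k (f 0)).
    - intros w1 w2 H1 H2 Z1 Z2 _ y.
      replace (fun i y => a i y * (w1 (f y) + w2 (f y))) with
        (fun i y => (fun i y => a i y * w1 (f y)) i y + (fun i y => a i y * w2 (f y)) i y)
        by (apply coeffs_ext; intros; ring).
      replace (fun i y => b i y * (w1 y + w2 y)) with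
        (fun i y => (fun i y => b i y * w1 y) i y + (fun i y => b i y * w2 y) i y)
        by (apply coeffs_ext; intros; ring).
      rewrite !P1_plus by auto using Dk_mult_fun, sfun_comp_diffS1.
      specialize (Z1 H1 y). specialize (Z2 H2 y). lra.
    - intros w Hw Hflat _ y.
      assert (Hwf := sfun_comp_diffS1 f Hf w Hw).
      assert (Ha' := Dk_mult_fun k a _ Ha Hwf). assert (Hb' := Dk_mult_fun k b w Hb Hw).
      assert (Local : forall p, flat w k (f p) ->
        P1 k (fun i y => b i y * w y) 1%nat (f y) - P1 k (fun i y => a i y * w (f y)) 1%nat y = 0).
      { intros p Hp.
        rewrite (P1_natural_sub_const _ _ Ha' Hb' (act_rel_mult_fun k f a b w Hab) y p).
        assert (Fb : forall i, flat (fun y => b i y * w y) k (f p)).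
        { intros i. apply flat_mult_l; [exact (Dk_smooth k b Hb i)|apply Hw|exact Hp]. }
        assert (Fa : forall i, flat (fun y => a i y * w (f y)) k p).
        { intros i. apply flat_mult_l; [exact (Dk_smooth k a Ha i)|apply Hwf|].
          apply flat_comp; [apply Hw|apply (diffS1_smooth f Hf)|exact Hp]. }
        rewrite !P1_flat by auto. ring. }
      destruct (diffS1_surj f Hf (f 0 + / 2)) as [x1 Hx1].
      destruct Hflat as [Hp|Hp]; [apply (Local 0)|apply (Local x1); rewrite Hx1]; exact Hp. }
  specialize (Z1 (sfun_const 1) x). cbv beta in Z1.
  replace (fun i y => a i y * 1) with a in Z1 by (apply coeffs_ext; intros; ring).
  replace (fun i y => b i y * 1) with b in Z1 by (apply coeffs_ext; intros; ring). lra.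
Qed.

End P1Natural.

Lemma in_Ik_P1 k : (1 <= k)%nat -> in_Ik k (P1 k).
Proof.
  intros Hk. split; [|split; [|split]].
  - intros a Ha. now apply Dk_P1.
  - apply P1_plus.
  - intros; apply P1_scal.
  - intros f Hf a b Ha Hb Hab phi Hphi x.
    rewrite !op_order_1 by (exact Hk || apply order_le_P1).
    simpl P1 at 1 3. rewrite (P1_natural k f Hk Hf a b x Ha Hb Hab).
    rewrite (Derive_comp phi f x) by (apply smooth_ex_derive; [apply Hphi || apply Hf]).
    ring.
Qed.

Lemma Dk_Lmap k a : (1 <= k)%nat -> Dk k (Lmap k a).
Proof.
  intros Hk. apply Dk_of_order_1; [exact Hk| | |apply order_le_Lmap].
  - change (Lmap k a 0%nat) with (fun _ : R => 0). apply sfun_const.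
  - change (Lmap k a 1%nat) with (fun _ : R => RInt (a 0%nat) 0 1). apply sfun_const.
Qed.

Lemma in_Ik_Lmap k : (1 <= k)%nat -> in_Ik k (Lmap k).
Proof.
  intros Hk. split; [|split; [|split]].
  - intros; now apply Dk_Lmap.
  - intros a c Ha Hc. apply coeffs_ext. intros [|[|i]] x; simpl; try ring.
    apply RInt_plus_smooth; [exact (Dk_smooth k a Ha 0%nat)|exact (Dk_smooth k c Hc 0%nat)].
  - intros r a Ha. apply coeffs_ext. intros [|[|i]] x; simpl; try ring.
    apply RInt_scal_smooth, (Dk_smooth k a Ha 0%nat).
  - intros f Hf a b Ha Hb Hab phi Hphi x.
    rewrite !op_order_1 by (exact Hk || apply order_le_Lmap). simpl.
    assert (I : RInt (a 0%nat) 0 1 = RInt (b 0%nat) 0 1).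
    { rewrite <- (RInt_comp_diffS1 f Hf (b 0%nat)) by exact (Dk_sfun k b Hb 0%nat).
      apply RInt_ext_R. intros y. symmetry. now apply (act_rel_coeff0 k f a b). }
    rewrite I, (Derive_comp phi f x) by (apply smooth_ex_derive; [apply Hphi || apply Hf]).
    ring.
Qed.

Section OrderOne.

Variables (k : nat) (c : coeffs).
Hypotheses (Hk : (1 <= k)%nat) (Hc : Dk k c) (Hc1 : order_le 1 c).

Lemma Cmap_order_1 : Cmap k c = fun i x => match i with
  | 0%nat => c 0%nat x - Derive (c 1%nat) x
  | 1%nat => - c 1%nat x
  | _ => 0 end.
Proof.
  assert (H0 := Dk_sfun k c Hc 0%nat). assert (H1 := Dk_sfun k c Hc 1%nat).
  apply Cmap_eq; auto. apply Cspec_of_adjoint.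
  - apply Dk_of_order_1; auto using sfun_opp; [|intros [|[|i]] x H; [lia|lia|reflexivity]].
    apply sfun_plus, sfun_opp, sfun_Derive; auto.
  - intros g Hg x.
    rewrite op_order_1, adjoint_order_1
      by (exact Hk || exact Hc1 || (intros [|[|i]] y H; [lia|lia|reflexivity])).
    rewrite Derive_mult by (apply smooth_ex_derive; apply H1 || apply Hg). ring.
Qed.

Lemma P0s_order_1 x : P0s k c 0%nat x = c 0%nat x - Derive (c 1%nat) x.
Proof. rewrite P0s_Cmap, Cmap_order_1; auto. Qed.

Lemma P1_order_1 x : P1 k c 1%nat x = c 1%nat x.
Proof.
  unfold P1. rewrite (sum_n_trunc _ 0 (k - 1)), sum_n_0; [simpl; ring|lia|].
  intros i Hi. rewrite (Derive_n_ext _ (fun _ => 0)), Derive_n_zero by (intros; apply Hc1; lia).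
  ring.
Qed.

End OrderOne.

Lemma RInt_P0s k a : (1 <= k)%nat -> Dk k a -> RInt (P0s k a 0%nat) 0 1 = RInt (a 0%nat) 0 1.
Proof.
  intros Hk Ha. assert (HP1 := sfun_P1 k a Ha).
  rewrite (RInt_ext_R _ (fun x => a 0%nat x + -1 * Derive (P1 k a 1%nat) x))
    by (intros; rewrite Derive_P1 by auto; ring).
  rewrite RInt_plus_smooth, RInt_scal_smooth, RInt_Derive_periodic; auto.
  - ring_R.
  - apply smooth_Derive, HP1.
  - exact (Dk_smooth k a Ha 0%nat).
  - apply smooth_scal, smooth_Derive, HP1.
Qed.

(** * The multiplication table *)

Section Relations.

Variable k : nat.
Hypothesis Hk : (1 <= k)%nat.

Lemma P0_P0 : eqmap k (mcomp (P0 k) (P0 k)) (P0 k).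
Proof. intros a Ha. apply coeffs_ext. intros [|i] x; reflexivity. Qed.

Lemma P0_P0s : eqmap k (mcomp (P0 k) (P0s k)) (P0s k).
Proof. intros a Ha. apply coeffs_ext. intros [|i] x; reflexivity. Qed.

Lemma P0_P1 : eqmap k (mcomp (P0 k) (P1 k)) zeromap.
Proof. intros a Ha. apply coeffs_ext. intros [|i] x; reflexivity. Qed.

Lemma P0_L : eqmap k (mcomp (P0 k) (Lmap k)) zeromap.
Proof. intros a Ha. apply coeffs_ext. intros [|i] x; reflexivity. Qed.

Lemma C_P0 : eqmap k (mcomp (Cmap k) (P0 k)) (P0 k).
Proof.
  intros a Ha. unfold mcomp. rewrite Cmap_order_1 by auto using Dk_P0, order_le_P0.
  apply coeffs_ext. intros [|[|i]] x; simpl; [rewrite Derive_const|..]; ring.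
Qed.

Lemma C_C : eqmap k (mcomp (Cmap k) (Cmap k)) idmap.
Proof. exact (Cmap_involutive k). Qed.

Lemma C_P0s : eqmap k (mcomp (Cmap k) (P0s k)) (P0s k).
Proof.
  intros a Ha. unfold mcomp. rewrite Cmap_order_1 by auto using Dk_P0s, order_le_P0s.
  apply coeffs_ext. intros [|[|i]] x; simpl; [rewrite Derive_const|..]; ring.
Qed.

Lemma C_P1 : eqmap k (mcomp (Cmap k) (P1 k))
                     (addmap (addmap (P0s k) (oppmap (P1 k))) (oppmap (P0 k))).
Proof.
  intros a Ha. unfold mcomp. rewrite Cmap_order_1 by auto using Dk_P1, order_le_P1.
  apply coeffs_ext. intros [|[|i]] x; unfold addmap, oppmap; [|simpl; ring..].
  change (P1 k a 0%nat x) with 0. rewrite Derive_P1 by auto. simpl. ring.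
Qed.

Lemma C_L : eqmap k (mcomp (Cmap k) (Lmap k)) (oppmap (Lmap k)).
Proof.
  intros a Ha. unfold mcomp. rewrite Cmap_order_1 by auto using Dk_Lmap, order_le_Lmap.
  apply coeffs_ext. intros [|[|i]] x; unfold oppmap; simpl; [rewrite Derive_const|..]; ring.
Qed.

Lemma P0s_P0 : eqmap k (mcomp (P0s k) (P0 k)) (P0 k).
Proof.
  intros a Ha. apply coeffs_ext. intros [|i] x; [|reflexivity]. unfold mcomp.
  rewrite P0s_order_1 by auto using Dk_P0, order_le_P0. simpl. rewrite Derive_const. ring.
Qed.

Lemma P0s_C : eqmap k (mcomp (P0s k) (Cmap k)) (P0 k).
Proof.
  intros a Ha. apply coeffs_ext. intros [|i] x; [|reflexivity]. unfold mcomp.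
  rewrite P0s_Cmap, Cmap_involutive by auto using Dk_Cmap. reflexivity.
Qed.

Lemma P0s_P0s : eqmap k (mcomp (P0s k) (P0s k)) (P0s k).
Proof.
  intros a Ha. apply coeffs_ext. intros [|i] x; [|reflexivity]. unfold mcomp.
  rewrite P0s_order_1 by auto using Dk_P0s, order_le_P0s. simpl. rewrite Derive_const. ring.
Qed.

Lemma P0s_P1 : eqmap k (mcomp (P0s k) (P1 k)) (addmap (P0s k) (oppmap (P0 k))).
Proof.
  intros a Ha. apply coeffs_ext. intros [|i] x; unfold mcomp, addmap, oppmap; [|simpl; ring].
  rewrite P0s_order_1, Derive_P1 by auto using Dk_P1, order_le_P1. simpl. ring.
Qed.

Lemma P0s_L : eqmap k (mcomp (P0s k) (Lmap k)) zeromap.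
Proof.
  intros a Ha. apply coeffs_ext. intros [|i] x; [|reflexivity]. unfold mcomp.
  rewrite P0s_order_1 by auto using Dk_Lmap, order_le_Lmap. simpl. rewrite Derive_const.
  unfold zeromap. ring.
Qed.

Lemma P1_P0 : eqmap k (mcomp (P1 k) (P0 k)) zeromap.
Proof.
  intros a Ha. apply coeffs_ext. intros [|[|i]] x; try reflexivity. unfold mcomp.
  now rewrite P1_order_1 by auto using Dk_P0, order_le_P0.
Qed.

Lemma P1_C : eqmap k (mcomp (P1 k) (Cmap k)) (oppmap (P1 k)).
Proof.
  intros a Ha. apply coeffs_ext.
  intros [|[|i]] x; unfold mcomp, oppmap; [simpl; ring| |simpl; ring].
  now apply P1_Cmap.
Qed.

Lemma P1_P0s : eqmap k (mcomp (P1 k) (P0s k)) zeromap.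
Proof.
  intros a Ha. apply coeffs_ext. intros [|[|i]] x; try reflexivity. unfold mcomp.
  now rewrite P1_order_1 by auto using Dk_P0s, order_le_P0s.
Qed.

Lemma P1_P1 : eqmap k (mcomp (P1 k) (P1 k)) (P1 k).
Proof.
  intros a Ha. apply coeffs_ext. intros [|[|i]] x; try reflexivity. unfold mcomp.
  now rewrite P1_order_1 by auto using Dk_P1, order_le_P1.
Qed.

Lemma P1_L : eqmap k (mcomp (P1 k) (Lmap k)) (Lmap k).
Proof.
  intros a Ha. apply coeffs_ext. intros [|[|i]] x; try reflexivity. unfold mcomp.
  now rewrite P1_order_1 by auto using Dk_Lmap, order_le_Lmap.
Qed.

Lemma L_P0 : eqmap k (mcomp (Lmap k) (P0 k)) (Lmap k).
Proof. intros a Ha. apply coeffs_ext. intros [|[|i]] x; reflexivity. Qed.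

Lemma L_C : eqmap k (mcomp (Lmap k) (Cmap k)) (Lmap k).
Proof.
  intros a Ha. apply coeffs_ext. intros [|[|i]] x; try reflexivity. simpl.
  rewrite <- (RInt_P0s k) by auto. apply RInt_ext_R. intros y. symmetry. now apply P0s_Cmap.
Qed.

Lemma L_P0s : eqmap k (mcomp (Lmap k) (P0s k)) (Lmap k).
Proof. intros a Ha. apply coeffs_ext. intros [|[|i]] x; try reflexivity. now apply RInt_P0s. Qed.

Lemma L_P1 : eqmap k (mcomp (Lmap k) (P1 k)) zeromap.
Proof. intros a Ha. apply coeffs_ext. intros [|[|i]] x; try reflexivity. apply RInt_zero. Qed.

Lemma L_L : eqmap k (mcomp (Lmap k) (Lmap k)) zeromap.
Proof. intros a Ha. apply coeffs_ext. intros [|[|i]] x; try reflexivity. apply RInt_zero. Qed.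

End Relations.

Theorem proposition5p1 (k : nat) (hk : (1 <= k)%nat) :
  (forall a, Dk k a -> Cspec k a (Cmap k a)) /\
  in_Ik k (Cmap k) /\ in_Ik k (P0 k) /\ in_Ik k (P0s k) /\
  in_Ik k (P1 k) /\ in_Ik k (Lmap k) /\
  (* P_0 row *)
  eqmap k (mcomp (P0 k) (P0 k)) (P0 k) /\
  eqmap k (mcomp (P0 k) (Cmap k)) (P0s k) /\
  eqmap k (mcomp (P0 k) (P0s k)) (P0s k) /\
  eqmap k (mcomp (P0 k) (P1 k)) zeromap /\
  eqmap k (mcomp (P0 k) (Lmap k)) zeromap /\
  (* C row *)
  eqmap k (mcomp (Cmap k) (P0 k)) (P0 k) /\
  eqmap k (mcomp (Cmap k) (Cmap k)) idmap /\
  eqmap k (mcomp (Cmap k) (P0s k)) (P0s k) /\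
  eqmap k (mcomp (Cmap k) (P1 k))
          (addmap (addmap (P0s k) (oppmap (P1 k))) (oppmap (P0 k))) /\
  eqmap k (mcomp (Cmap k) (Lmap k)) (oppmap (Lmap k)) /\
  (* P_0^* row *)
  eqmap k (mcomp (P0s k) (P0 k)) (P0 k) /\
  eqmap k (mcomp (P0s k) (Cmap k)) (P0 k) /\
  eqmap k (mcomp (P0s k) (P0s k)) (P0s k) /\
  eqmap k (mcomp (P0s k) (P1 k)) (addmap (P0s k) (oppmap (P0 k))) /\
  eqmap k (mcomp (P0s k) (Lmap k)) zeromap /\
  (* P_1 row *)
  eqmap k (mcomp (P1 k) (P0 k)) zeromap /\
  eqmap k (mcomp (P1 k) (Cmap k)) (oppmap (P1 k)) /\
  eqmap k (mcomp (P1 k) (P0s k)) zeromap /\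
  eqmap k (mcomp (P1 k) (P1 k)) (P1 k) /\
  eqmap k (mcomp (P1 k) (Lmap k)) (Lmap k) /\
  (* L row *)
  eqmap k (mcomp (Lmap k) (P0 k)) (Lmap k) /\
  eqmap k (mcomp (Lmap k) (Cmap k)) (Lmap k) /\
  eqmap k (mcomp (Lmap k) (P0s k)) (Lmap k) /\
  eqmap k (mcomp (Lmap k) (P1 k)) zeromap /\
  eqmap k (mcomp (Lmap k) (Lmap k)) zeromap.
Proof.
  repeat match goal with |- _ /\ _ => split end;
    auto using Cmap_spec, in_Ik_Cmap, in_Ik_P0, in_Ik_P0s, in_Ik_P1, in_Ik_Lmap,
      P0_P0, P0_C, P0_P0s, P0_P1, P0_L,
      C_P0, C_C, C_P0s, C_P1, C_L,
      P0s_P0, P0s_C, P0s_P0s, P0s_P1, P0s_L,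
      P1_P0, P1_C, P1_P0s, P1_P1, P1_L,
      L_P0, L_C, L_P0s, L_P1, L_L.
Qed.
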